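(* Let $\mathcal S=\{s_1,\dots,s_n,(p_1,l_1),\dots,(p_m,l_m)\}$ be a configuration. Suppose there exists $f\in F_{\mathcal S}$ such that (1) $\mathcal Z(f)=\{s_1,\dots,s_n,p_1,\dots,p_m\}$; (2) $\operatorname{inp}_f(s_i)=\emptyset$ for all $i=1,\dots,n$; (3) $\operatorname{ord}_{p_j}(f)=2$ for all $j=1,\dots,m$; (4) for each $j=1,\dots,m$, $D_f''(0)\ne0$, where $D_f$ is the discriminant of $f$ at $p_j$ computed in some affine coordinates centered at $p_j$ in which $l_j=\{y=0\}$. Then $\operatorname{span}(F_{\mathcal S})=I_{\mathcal S}$; in particular $\dim I_{\mathcal S}=\dim F_{\mathcal S}$.
   Context: Notation. $H_k\subseteq\mathbb R[x,y,z]$ is the real vector space of ternary forms of degree $k$. For $I\subseteq H_k$ (or a single form), $\mathcal Z(I)$ is the set of common real zeros in $\mathbb P^2(\mathbb R)$. $P_{3,4}=\{f\in H_4: f\ge0\text{ on }\mathbb P^2(\mathbb R)\}$. Local notation. For $p\in\mathbb P^2(\mathbb R)$, affine coordinates centered at $p$ are obtained by an invertible real linear change of coordinates sending $p$ to $(0:0:1)$ followed by setting $z=1$; $f\in H_4$ becomes $f(x,y)=\sum_{i+j\le4}a_{ij}x^iy^j=f_0+\dots+f_4$ ($f_k$ homogeneous of degree $k$), and $\operatorname{ord}_p(f)$ is the least $k$ with $f_k\ne0$. If $\operatorname{ord}_pf\ge2$, put $\tilde f(x,y)=f(x,xy)/x^2=f_2(1,y)+xf_3(1,y)+x^2f_4(1,y)$;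 the set $\operatorname{inp}_f(p)$ of first-order real infinitely near points of $f$ at $p$ is the set of real directions $[u:w]\in\mathbb P^1(\mathbb R)$ with $f_2(u,w)=0$ (all directions if $f_2=0$). The discriminant of $f$ at $p$ is $D_f(y)=(f_3^2-4f_2f_4)(1,y)$. Sets. $F_s=\{f\in P_{3,4}: f(s)=0\}$, $I_s=\{f\in H_4:\operatorname{ord}_sf\ge2\}$. For a real line $l\ni p$, in affine coordinates centered at $p$ with $l=\{y=0\}$: $F_{(p,l)}=\{f\in P_{3,4}: f(p)=0,\ \tilde f(0,0)=0\}$ and $I_{(p,l)}=\{f\in H_4: a_{00}=a_{10}=a_{01}=a_{20}=a_{11}=a_{30}=0\}$. A configuration is $\mathcal S=\{s_1,\dots,s_n,(p_1,l_1),\dots,(p_m,l_m)\}$ with $s_1,\dots,s_n,p_1,\dots,p_m\in\mathbb P^2(\mathbb R)$ pairwise distinct and $l_j$ real lines with $p_j\in l_j$; $F_{\mathcal S}=\bigcap_iF_{s_i}\cap\bigcap_jF_{(p_j,l_j)}$ and $I_{\mathcal S}=\bigcap_iI_{s_i}\cap\bigcap_jI_{(p_j,l_j)}$. *)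

From Stdlib Require Import Reals List.
Open Scope R_scope.

(** Points of R^3 (homogeneous coordinates). *)
Definition V3 : Type := (R * R * R)%type.
Definition v0 : V3 := (0, 0, 0).
Definition vx (v : V3) : R := fst (fst v).
Definition vy (v : V3) : R := snd (fst v).
Definition vz (v : V3) : R := snd v.
Definition vscal (r : R) (v : V3) : V3 := (r * vx v, r * vy v, r * vz v).
Definition vdot (u v : V3) : R := vx u * vx v + vy u * vy v + vz u * vz v.

Definition proj_eq (u v : V3) : Prop := exists r : R, r <> 0 /\ v = vscal r u.

(** Ternary quartic forms: [c i j] is the coefficient of x^i y^j z^(4-i-j);
    only the entries with i + j <= 4 are meaningful. *)
Definition form : Type := nat -> nat -> R.

Definition ev (c : form) (v : V3) : R :=
  sum_f_R0 (fun i => sum_f_R0 (fun j =>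
     c i j * vx v ^ i * vy v ^ j * vz v ^ (4 - i - j)) (4 - i)) 4.

Definition feq (f g : form) : Prop :=
  forall i j, (i + j <= 4)%nat -> f i j = g i j.

Definition lincomb (l : list (R * form)) : form :=
  fun i j => fold_right (fun rh acc => fst rh * snd rh i j + acc) 0 l.

Definition in_span (F : form -> Prop) (g : form) : Prop :=
  exists l : list (R * form), (forall rh, In rh l -> F (snd rh)) /\ feq g (lincomb l).

Definition psd (f : form) : Prop := forall v : V3, 0 <= ev f v.

(** Linear change of coordinates given by the columns c1 c2 c3 of an invertible
    matrix A: a point with new coordinates (x,y,z) is x c1 + y c2 + z c3.
    (A is the inverse of the coordinate change of the paper.) *)
Record coords := mkCoords { col1 : V3; col2 : V3; col3 : V3 }.

Definition apply (A : coords) (x y z : R) : V3 :=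
  (x * vx (col1 A) + y * vx (col2 A) + z * vx (col3 A),
   x * vy (col1 A) + y * vy (col2 A) + z * vy (col3 A),
   x * vz (col1 A) + y * vz (col2 A) + z * vz (col3 A)).

Definition det3 (A : coords) : R :=
  let a := col1 A in let b := col2 A in let c := col3 A in
  vx a * (vy b * vz c - vz b * vy c)
  - vx b * (vy a * vz c - vz a * vy c)
  + vx c * (vy a * vz b - vz a * vy b).

(** Affine coordinates centered at p: invertible change sending p to (0:0:1). *)
Definition centered (A : coords) (p : V3) : Prop :=
  det3 A <> 0 /\ proj_eq p (col3 A).

(** ... and in which the line l = {q | L . q = 0} is {y = 0}. *)
Definition centered_line (A : coords) (p L : V3) : Prop :=
  centered A p /\ vdot L (col1 A) = 0 /\ vdot L (col3 A) = 0.

(** [a] is the coefficient array of the dehomogenization f(x,y) = f(A(x,y,1)),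
    i.e. f(x,y) = sum_{i+j<=4} a_{ij} x^i y^j. *)
Definition loc_coeffs (A : coords) (f : form) (a : nat -> nat -> R) : Prop :=
  forall x y : R,
    ev f (apply A x y 1) =
    sum_f_R0 (fun i => sum_f_R0 (fun j => a i j * x ^ i * y ^ j) (4 - i)) 4.

(** Coefficients of f_k(1,y) in y: f_k(1,y) = sum_j a_{k-j,j} y^j. *)
Definition hcoef (a : nat -> nat -> R) (k j : nat) : R :=
  if (j <=? k)%nat then a (k - j)%nat j else 0.

(** Coefficient of y^k in D_f(y) = (f_3^2 - 4 f_2 f_4)(1,y). *)
Definition Dcoef (a : nat -> nat -> R) (k : nat) : R :=
  sum_f_R0 (fun i => hcoef a 3 i * hcoef a 3 (k - i)) k
  - 4 * sum_f_R0 (fun i => hcoef a 2 i * hcoef a 4 (k - i)) k.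

(** D_f''(0) = 2 * (coefficient of y^2 in D_f). *)
Definition D2 (a : nat -> nat -> R) : R := 2 * Dcoef a 2.

(** ord >= 2 in the local coefficients: f_0 = f_1 = 0. *)
Definition ord_ge2 (a : nat -> nat -> R) : Prop :=
  a 0%nat 0%nat = 0 /\ a 1%nat 0%nat = 0 /\ a 0%nat 1%nat = 0.

Definition I_pt (s : V3) (f : form) : Prop :=
  exists A a, centered A s /\ loc_coeffs A f a /\ ord_ge2 a.

Definition I_fl (p L : V3) (f : form) : Prop :=
  exists A a, centered_line A p L /\ loc_coeffs A f a /\ ord_ge2 a /\
    a 2%nat 0%nat = 0 /\ a 1%nat 1%nat = 0 /\ a 3%nat 0%nat = 0.

Definition F_pt (s : V3) (f : form) : Prop := psd f /\ ev f s = 0.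

(** F_(p,l): f(p) = 0 and tilde f(0,0) = f_2(1,0) = a_{20} = 0. *)
Definition F_fl (p L : V3) (f : form) : Prop :=
  psd f /\ ev f p = 0 /\
  exists A a, centered_line A p L /\ loc_coeffs A f a /\ a 2%nat 0%nat = 0.

(** Configurations: s_0..s_{n-1}, (p_0,l_0)..(p_{m-1},l_{m-1}),
    with l_j = {q | L_j . q = 0}. *)
Definition config (n m : nat) (s p L : nat -> V3) : Prop :=
  (forall i, (i < n)%nat -> s i <> v0) /\
  (forall j, (j < m)%nat -> p j <> v0 /\ L j <> v0 /\ vdot (L j) (p j) = 0) /\
  (forall i i', (i < n)%nat -> (i' < n)%nat -> i <> i' -> ~ proj_eq (s i) (s i')) /\
  (forall j j', (j < m)%nat -> (j' < m)%nat -> j <> j' -> ~ proj_eq (p j) (p j')) /\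
  (forall i j, (i < n)%nat -> (j < m)%nat -> ~ proj_eq (s i) (p j)).

Definition F_S (n m : nat) (s p L : nat -> V3) (f : form) : Prop :=
  (forall i, (i < n)%nat -> F_pt (s i) f) /\
  (forall j, (j < m)%nat -> F_fl (p j) (L j) f).

Definition I_S (n m : nat) (s p L : nat -> V3) (f : form) : Prop :=
  (forall i, (i < n)%nat -> I_pt (s i) f) /\
  (forall j, (j < m)%nat -> I_fl (p j) (L j) f).

Definition zeroset_eq (n m : nat) (s p : nat -> V3) (f : form) : Prop :=
  forall q : V3, q <> v0 ->
    (ev f q = 0 <->
     ((exists i, (i < n)%nat /\ proj_eq (s i) q) \/
      (exists j, (j < m)%nat /\ proj_eq (p j) q))).

(** inp_f(s) is empty: ord_s f >= 2 and f_2(u,w) <> 0 for every real direction. *)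
Definition inp_empty (s : V3) (f : form) : Prop :=
  exists A a, centered A s /\ loc_coeffs A f a /\ ord_ge2 a /\
    forall u w : R, (u <> 0 \/ w <> 0) ->
      a 2%nat 0%nat * u ^ 2 + a 1%nat 1%nat * u * w + a 0%nat 2%nat * w ^ 2 <> 0.

Definition ord_eq2 (p : V3) (f : form) : Prop :=
  exists A a, centered A p /\ loc_coeffs A f a /\ ord_ge2 a /\
    ~ (a 2%nat 0%nat = 0 /\ a 1%nat 1%nat = 0 /\ a 0%nat 2%nat = 0).

Definition disc_cond (p L : V3) (f : form) : Prop :=
  exists A a, centered_line A p L /\ loc_coeffs A f a /\ D2 a <> 0.

(** The inclusion [span F_S <= I_S] is local: reading a form in an affine
    chart centered at a point of the configuration (the coefficients of its
    pullback along the chart), a nonnegative form vanishing at the center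
    has no constant or linear term, and if moreover [a20 = 0] then also
    [a11 = a30 = 0].  These conditions do not depend on the adapted chart
    and are linear, hence pass to the span.

    For the converse, take [g] in [I_S].  Near a zero [s_i] of [f] the
    quadratic part of [f] is positive definite (hypothesis (2)); near a zero
    [p_j] the weighted leading part [a02 y^2 + a21 x^2 y + a40 x^4] is
    positive definite since its discriminant is [D_f''(0)/2 <> 0]
    (hypotheses (3)-(4)).  In both cases [g] has the same vanishing
    pattern, so [f + eps g >= 0] near the zero for small [eps].  Away from
    the zeros (hypothesis (1)) [f > 0]; compactness of the cube boundary
    and homogeneity give one [eps] with [f + eps g] nonnegative.  That form
    lies in [F_S], and [g = ((f + eps g) - f) / eps]. *)

From Stdlib Require Import Reals List Lra Lia Psatz Classical ClassicalEpsilon.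
From Coquelicot Require Import Compactness.
Open Scope R_scope.

Local Notation "c .[ i , j ]" := (c i%nat j%nat)
  (at level 2, left associativity, only parsing).

Ltac unfold_ev := unfold ev, vscal, vx, vy, vz; simpl.

(** * Pulling back quartic forms along linear maps *)

(** The pullback of [h] along [(x,y,z) |-> apply A x y z], i.e. the form
    [h (x u + y v + z w)] for the columns [u], [v], [w] of [A]. *)
Definition pullback (A : coords) (h : form) : form := fun i j =>
  let u1 := vx (col1 A) in let u2 := vy (col1 A) in let u3 := vz (col1 A) in
  let v1 := vx (col2 A) in let v2 := vy (col2 A) in let v3 := vz (col2 A) in
  let w1 := vx (col3 A) in let w2 := vy (col3 A) in let w3 := vz (col3 A) in
  match i, j with
  | 0%nat, 0%nat => h.[0,0] * (w3^4) + h.[0,1] * (w2*w3^3) + h.[0,2] * (w2^2*w3^2) + h.[0,3] * (w2^3*w3) + h.[0,4] * (w2^4) + h.[1,0] * (w1*w3^3) + h.[1,1] * (w1*w2*w3^2) + h.[1,2] * (w1*w2^2*w3) + h.[1,3] * (w1*w2^3) + h.[2,0] * (w1^2*w3^2) + h.[2,1] * (w1^2*w2*w3) + h.[2,2] * (w1^2*w2^2) + h.[3,0] * (w1^3*w3) + h.[3,1] * (w1^3*w2) + h.[4,0] * (w1^4)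
  | 0%nat, 1%nat => h.[0,0] * (4*v3*w3^3) + h.[0,1] * (3*v3*w2*w3^2 + v2*w3^3) + h.[0,2] * (2*v3*w2^2*w3 + 2*v2*w2*w3^2) + h.[0,3] * (v3*w2^3 + 3*v2*w2^2*w3) + h.[0,4] * (4*v2*w2^3) + h.[1,0] * (3*v3*w1*w3^2 + v1*w3^3) + h.[1,1] * (2*v3*w1*w2*w3 + v2*w1*w3^2 + v1*w2*w3^2) + h.[1,2] * (v3*w1*w2^2 + 2*v2*w1*w2*w3 + v1*w2^2*w3) + h.[1,3] * (3*v2*w1*w2^2 + v1*w2^3) + h.[2,0] * (2*v3*w1^2*w3 + 2*v1*w1*w3^2) + h.[2,1] * (v3*w1^2*w2 + v2*w1^2*w3 + 2*v1*w1*w2*w3) + h.[2,2] * (2*v2*w1^2*w2 + 2*v1*w1*w2^2) + h.[3,0] * (v3*w1^3 + 3*v1*w1^2*w3) + h.[3,1] * (v2*w1^3 + 3*v1*w1^2*w2) + h.[4,0] * (4*v1*w1^3)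
  | 0%nat, 2%nat => h.[0,0] * (6*v3^2*w3^2) + h.[0,1] * (3*v3^2*w2*w3 + 3*v2*v3*w3^2) + h.[0,2] * (v3^2*w2^2 + 4*v2*v3*w2*w3 + v2^2*w3^2) + h.[0,3] * (3*v2*v3*w2^2 + 3*v2^2*w2*w3) + h.[0,4] * (6*v2^2*w2^2) + h.[1,0] * (3*v3^2*w1*w3 + 3*v1*v3*w3^2) + h.[1,1] * (v3^2*w1*w2 + 2*v2*v3*w1*w3 + 2*v1*v3*w2*w3 + v1*v2*w3^2) + h.[1,2] * (2*v2*v3*w1*w2 + v2^2*w1*w3 + v1*v3*w2^2 + 2*v1*v2*w2*w3) + h.[1,3] * (3*v2^2*w1*w2 + 3*v1*v2*w2^2) + h.[2,0] * (v3^2*w1^2 + 4*v1*v3*w1*w3 + v1^2*w3^2) + h.[2,1] * (v2*v3*w1^2 + 2*v1*v3*w1*w2 + 2*v1*v2*w1*w3 + v1^2*w2*w3) + h.[2,2] * (v2^2*w1^2 + 4*v1*v2*w1*w2 + v1^2*w2^2) + h.[3,0] * (3*v1*v3*w1^2 + 3*v1^2*w1*w3) + h.[3,1] * (3*v1*v2*w1^2 + 3*v1^2*w1*w2) + h.[4,0] * (6*v1^2*w1^2)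
  | 0%nat, 3%nat => h.[0,0] * (4*v3^3*w3) + h.[0,1] * (v3^3*w2 + 3*v2*v3^2*w3) + h.[0,2] * (2*v2*v3^2*w2 + 2*v2^2*v3*w3) + h.[0,3] * (3*v2^2*v3*w2 + v2^3*w3) + h.[0,4] * (4*v2^3*w2) + h.[1,0] * (v3^3*w1 + 3*v1*v3^2*w3) + h.[1,1] * (v2*v3^2*w1 + v1*v3^2*w2 + 2*v1*v2*v3*w3) + h.[1,2] * (v2^2*v3*w1 + 2*v1*v2*v3*w2 + v1*v2^2*w3) + h.[1,3] * (v2^3*w1 + 3*v1*v2^2*w2) + h.[2,0] * (2*v1*v3^2*w1 + 2*v1^2*v3*w3) + h.[2,1] * (2*v1*v2*v3*w1 + v1^2*v3*w2 + v1^2*v2*w3) + h.[2,2] * (2*v1*v2^2*w1 + 2*v1^2*v2*w2) + h.[3,0] * (3*v1^2*v3*w1 + v1^3*w3) + h.[3,1] * (3*v1^2*v2*w1 + v1^3*w2) + h.[4,0] * (4*v1^3*w1)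
  | 0%nat, 4%nat => h.[0,0] * (v3^4) + h.[0,1] * (v2*v3^3) + h.[0,2] * (v2^2*v3^2) + h.[0,3] * (v2^3*v3) + h.[0,4] * (v2^4) + h.[1,0] * (v1*v3^3) + h.[1,1] * (v1*v2*v3^2) + h.[1,2] * (v1*v2^2*v3) + h.[1,3] * (v1*v2^3) + h.[2,0] * (v1^2*v3^2) + h.[2,1] * (v1^2*v2*v3) + h.[2,2] * (v1^2*v2^2) + h.[3,0] * (v1^3*v3) + h.[3,1] * (v1^3*v2) + h.[4,0] * (v1^4)
  | 1%nat, 0%nat => h.[0,0] * (4*u3*w3^3) + h.[0,1] * (3*u3*w2*w3^2 + u2*w3^3) + h.[0,2] * (2*u3*w2^2*w3 + 2*u2*w2*w3^2) + h.[0,3] * (u3*w2^3 + 3*u2*w2^2*w3) + h.[0,4] * (4*u2*w2^3) + h.[1,0] * (3*u3*w1*w3^2 + u1*w3^3) + h.[1,1] * (2*u3*w1*w2*w3 + u2*w1*w3^2 + u1*w2*w3^2) + h.[1,2] * (u3*w1*w2^2 + 2*u2*w1*w2*w3 + u1*w2^2*w3) + h.[1,3] * (3*u2*w1*w2^2 + u1*w2^3) + h.[2,0] * (2*u3*w1^2*w3 + 2*u1*w1*w3^2) + h.[2,1] * (u3*w1^2*w2 + u2*w1^2*w3 + 2*u1*w1*w2*w3) + h.[2,2] * (2*u2*w1^2*w2 + 2*u1*w1*w2^2) + h.[3,0] * (u3*w1^3 + 3*u1*w1^2*w3) + h.[3,1] * (u2*w1^3 + 3*u1*w1^2*w2) +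 h.[4,0] * (4*u1*w1^3)
  | 1%nat, 1%nat => h.[0,0] * (12*u3*v3*w3^2) + h.[0,1] * (6*u3*v3*w2*w3 + 3*u3*v2*w3^2 + 3*u2*v3*w3^2) + h.[0,2] * (2*u3*v3*w2^2 + 4*u3*v2*w2*w3 + 4*u2*v3*w2*w3 + 2*u2*v2*w3^2) + h.[0,3] * (3*u3*v2*w2^2 + 3*u2*v3*w2^2 + 6*u2*v2*w2*w3) + h.[0,4] * (12*u2*v2*w2^2) + h.[1,0] * (6*u3*v3*w1*w3 + 3*u3*v1*w3^2 + 3*u1*v3*w3^2) + h.[1,1] * (2*u3*v3*w1*w2 + 2*u3*v2*w1*w3 + 2*u3*v1*w2*w3 + 2*u2*v3*w1*w3 + u2*v1*w3^2 + 2*u1*v3*w2*w3 + u1*v2*w3^2) + h.[1,2] * (2*u3*v2*w1*w2 + u3*v1*w2^2 + 2*u2*v3*w1*w2 + 2*u2*v2*w1*w3 + 2*u2*v1*w2*w3 + u1*v3*w2^2 + 2*u1*v2*w2*w3) + h.[1,3] * (6*u2*v2*w1*w2 + 3*u2*v1*w2^2 + 3*u1*v2*w2^2) + h.[2,0] * (2*u3*v3*w1^2 + 4*u3*v1*w1*w3 + 4*u1*v3*w1*w3 + 2*u1*v1*w3^2) + h.[2,1] * (u3*v2*w1^2 + 2*u3*v1*w1*w2 + u2*v3*w1^2 + 2*u2*v1*w1*w3 + 2*u1*v3*w1*w2 + 2*u1*v2*w1*w3 + 2*u1*v1*w2*w3) + h.[2,2] * (2*u2*v2*w1^2 + 4*u2*v1*w1*w2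 + 4*u1*v2*w1*w2 + 2*u1*v1*w2^2) + h.[3,0] * (3*u3*v1*w1^2 + 3*u1*v3*w1^2 + 6*u1*v1*w1*w3) + h.[3,1] * (3*u2*v1*w1^2 + 3*u1*v2*w1^2 + 6*u1*v1*w1*w2) + h.[4,0] * (12*u1*v1*w1^2)
  | 1%nat, 2%nat => h.[0,0] * (12*u3*v3^2*w3) + h.[0,1] * (3*u3*v3^2*w2 + 6*u3*v2*v3*w3 + 3*u2*v3^2*w3) + h.[0,2] * (4*u3*v2*v3*w2 + 2*u3*v2^2*w3 + 2*u2*v3^2*w2 + 4*u2*v2*v3*w3) + h.[0,3] * (3*u3*v2^2*w2 + 6*u2*v2*v3*w2 + 3*u2*v2^2*w3) + h.[0,4] * (12*u2*v2^2*w2) + h.[1,0] * (3*u3*v3^2*w1 + 6*u3*v1*v3*w3 + 3*u1*v3^2*w3) + h.[1,1] * (2*u3*v2*v3*w1 + 2*u3*v1*v3*w2 + 2*u3*v1*v2*w3 + u2*v3^2*w1 + 2*u2*v1*v3*w3 + u1*v3^2*w2 + 2*u1*v2*v3*w3) + h.[1,2] * (u3*v2^2*w1 + 2*u3*v1*v2*w2 + 2*u2*v2*v3*w1 + 2*u2*v1*v3*w2 + 2*u2*v1*v2*w3 + 2*u1*v2*v3*w2 + u1*v2^2*w3) + h.[1,3] * (3*u2*v2^2*w1 + 6*u2*v1*v2*w2 + 3*u1*v2^2*w2) + h.[2,0] * (4*u3*v1*v3*w1 + 2*u3*v1^2*w3 + 2*u1*v3^2*w1 + 4*u1*v1*v3*w3)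 + h.[2,1] * (2*u3*v1*v2*w1 + u3*v1^2*w2 + 2*u2*v1*v3*w1 + u2*v1^2*w3 + 2*u1*v2*v3*w1 + 2*u1*v1*v3*w2 + 2*u1*v1*v2*w3) + h.[2,2] * (4*u2*v1*v2*w1 + 2*u2*v1^2*w2 + 2*u1*v2^2*w1 + 4*u1*v1*v2*w2) + h.[3,0] * (3*u3*v1^2*w1 + 6*u1*v1*v3*w1 + 3*u1*v1^2*w3) + h.[3,1] * (3*u2*v1^2*w1 + 6*u1*v1*v2*w1 + 3*u1*v1^2*w2) + h.[4,0] * (12*u1*v1^2*w1)
  | 1%nat, 3%nat => h.[0,0] * (4*u3*v3^3) + h.[0,1] * (3*u3*v2*v3^2 + u2*v3^3) + h.[0,2] * (2*u3*v2^2*v3 + 2*u2*v2*v3^2) + h.[0,3] * (u3*v2^3 + 3*u2*v2^2*v3) + h.[0,4] * (4*u2*v2^3) + h.[1,0] * (3*u3*v1*v3^2 + u1*v3^3) + h.[1,1] * (2*u3*v1*v2*v3 + u2*v1*v3^2 + u1*v2*v3^2) + h.[1,2] * (u3*v1*v2^2 + 2*u2*v1*v2*v3 + u1*v2^2*v3) + h.[1,3] * (3*u2*v1*v2^2 + u1*v2^3) + h.[2,0] * (2*u3*v1^2*v3 + 2*u1*v1*v3^2) + h.[2,1] * (u3*v1^2*v2 + u2*v1^2*v3 + 2*u1*v1*v2*v3) + h.[2,2] * (2*u2*v1^2*v2 + 2*u1*v1*v2^2) + h.[3,0] * (u3*v1^3 + 3*u1*v1^2*v3) + h.[3,1] * (u2*v1^3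 + 3*u1*v1^2*v2) + h.[4,0] * (4*u1*v1^3)
  | 2%nat, 0%nat => h.[0,0] * (6*u3^2*w3^2) + h.[0,1] * (3*u3^2*w2*w3 + 3*u2*u3*w3^2) + h.[0,2] * (u3^2*w2^2 + 4*u2*u3*w2*w3 + u2^2*w3^2) + h.[0,3] * (3*u2*u3*w2^2 + 3*u2^2*w2*w3) + h.[0,4] * (6*u2^2*w2^2) + h.[1,0] * (3*u3^2*w1*w3 + 3*u1*u3*w3^2) + h.[1,1] * (u3^2*w1*w2 + 2*u2*u3*w1*w3 + 2*u1*u3*w2*w3 + u1*u2*w3^2) + h.[1,2] * (2*u2*u3*w1*w2 + u2^2*w1*w3 + u1*u3*w2^2 + 2*u1*u2*w2*w3) + h.[1,3] * (3*u2^2*w1*w2 + 3*u1*u2*w2^2) + h.[2,0] * (u3^2*w1^2 + 4*u1*u3*w1*w3 + u1^2*w3^2) + h.[2,1] * (u2*u3*w1^2 + 2*u1*u3*w1*w2 + 2*u1*u2*w1*w3 + u1^2*w2*w3) + h.[2,2] * (u2^2*w1^2 + 4*u1*u2*w1*w2 + u1^2*w2^2) + h.[3,0] * (3*u1*u3*w1^2 + 3*u1^2*w1*w3) + h.[3,1] * (3*u1*u2*w1^2 + 3*u1^2*w1*w2) + h.[4,0] * (6*u1^2*w1^2)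
  | 2%nat, 1%nat => h.[0,0] * (12*u3^2*v3*w3) + h.[0,1] * (3*u3^2*v3*w2 + 3*u3^2*v2*w3 + 6*u2*u3*v3*w3) + h.[0,2] * (2*u3^2*v2*w2 + 4*u2*u3*v3*w2 + 4*u2*u3*v2*w3 + 2*u2^2*v3*w3) + h.[0,3] * (6*u2*u3*v2*w2 + 3*u2^2*v3*w2 + 3*u2^2*v2*w3) + h.[0,4] * (12*u2^2*v2*w2) + h.[1,0] * (3*u3^2*v3*w1 + 3*u3^2*v1*w3 + 6*u1*u3*v3*w3) + h.[1,1] * (u3^2*v2*w1 + u3^2*v1*w2 + 2*u2*u3*v3*w1 + 2*u2*u3*v1*w3 + 2*u1*u3*v3*w2 + 2*u1*u3*v2*w3 + 2*u1*u2*v3*w3) + h.[1,2] * (2*u2*u3*v2*w1 + 2*u2*u3*v1*w2 + u2^2*v3*w1 + u2^2*v1*w3 + 2*u1*u3*v2*w2 + 2*u1*u2*v3*w2 + 2*u1*u2*v2*w3) + h.[1,3] * (3*u2^2*v2*w1 + 3*u2^2*v1*w2 + 6*u1*u2*v2*w2) + h.[2,0] * (2*u3^2*v1*w1 + 4*u1*u3*v3*w1 + 4*u1*u3*v1*w3 + 2*u1^2*v3*w3) + h.[2,1] * (2*u2*u3*v1*w1 + 2*u1*u3*v2*w1 + 2*u1*u3*v1*w2 + 2*u1*u2*v3*w1 + 2*u1*u2*v1*w3 + u1^2*v3*w2 + u1^2*v2*w3) + h.[2,2] * (2*u2^2*v1*w1 + 4*u1*u2*v2*w1 + 4*u1*u2*v1*w2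 + 2*u1^2*v2*w2) + h.[3,0] * (6*u1*u3*v1*w1 + 3*u1^2*v3*w1 + 3*u1^2*v1*w3) + h.[3,1] * (6*u1*u2*v1*w1 + 3*u1^2*v2*w1 + 3*u1^2*v1*w2) + h.[4,0] * (12*u1^2*v1*w1)
  | 2%nat, 2%nat => h.[0,0] * (6*u3^2*v3^2) + h.[0,1] * (3*u3^2*v2*v3 + 3*u2*u3*v3^2) + h.[0,2] * (u3^2*v2^2 + 4*u2*u3*v2*v3 + u2^2*v3^2) + h.[0,3] * (3*u2*u3*v2^2 + 3*u2^2*v2*v3) + h.[0,4] * (6*u2^2*v2^2) + h.[1,0] * (3*u3^2*v1*v3 + 3*u1*u3*v3^2) + h.[1,1] * (u3^2*v1*v2 + 2*u2*u3*v1*v3 + 2*u1*u3*v2*v3 + u1*u2*v3^2) + h.[1,2] * (2*u2*u3*v1*v2 + u2^2*v1*v3 + u1*u3*v2^2 + 2*u1*u2*v2*v3) + h.[1,3] * (3*u2^2*v1*v2 + 3*u1*u2*v2^2) + h.[2,0] * (u3^2*v1^2 + 4*u1*u3*v1*v3 + u1^2*v3^2) + h.[2,1] * (u2*u3*v1^2 + 2*u1*u3*v1*v2 + 2*u1*u2*v1*v3 + u1^2*v2*v3) + h.[2,2] * (u2^2*v1^2 + 4*u1*u2*v1*v2 + u1^2*v2^2) + h.[3,0] * (3*u1*u3*v1^2 + 3*u1^2*v1*v3) + h.[3,1] * (3*u1*u2*v1^2 + 3*u1^2*v1*v2) + h.[4,0] * (6*u1^2*v1^2)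
  | 3%nat, 0%nat => h.[0,0] * (4*u3^3*w3) + h.[0,1] * (u3^3*w2 + 3*u2*u3^2*w3) + h.[0,2] * (2*u2*u3^2*w2 + 2*u2^2*u3*w3) + h.[0,3] * (3*u2^2*u3*w2 + u2^3*w3) + h.[0,4] * (4*u2^3*w2) + h.[1,0] * (u3^3*w1 + 3*u1*u3^2*w3) + h.[1,1] * (u2*u3^2*w1 + u1*u3^2*w2 + 2*u1*u2*u3*w3) + h.[1,2] * (u2^2*u3*w1 + 2*u1*u2*u3*w2 + u1*u2^2*w3) + h.[1,3] * (u2^3*w1 + 3*u1*u2^2*w2) + h.[2,0] * (2*u1*u3^2*w1 + 2*u1^2*u3*w3) + h.[2,1] * (2*u1*u2*u3*w1 + u1^2*u3*w2 + u1^2*u2*w3) + h.[2,2] * (2*u1*u2^2*w1 + 2*u1^2*u2*w2) + h.[3,0] * (3*u1^2*u3*w1 + u1^3*w3) + h.[3,1] * (3*u1^2*u2*w1 + u1^3*w2) + h.[4,0] * (4*u1^3*w1)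
  | 3%nat, 1%nat => h.[0,0] * (4*u3^3*v3) + h.[0,1] * (u3^3*v2 + 3*u2*u3^2*v3) + h.[0,2] * (2*u2*u3^2*v2 + 2*u2^2*u3*v3) + h.[0,3] * (3*u2^2*u3*v2 + u2^3*v3) + h.[0,4] * (4*u2^3*v2) + h.[1,0] * (u3^3*v1 + 3*u1*u3^2*v3) + h.[1,1] * (u2*u3^2*v1 + u1*u3^2*v2 + 2*u1*u2*u3*v3) + h.[1,2] * (u2^2*u3*v1 + 2*u1*u2*u3*v2 + u1*u2^2*v3) + h.[1,3] * (u2^3*v1 + 3*u1*u2^2*v2) + h.[2,0] * (2*u1*u3^2*v1 + 2*u1^2*u3*v3) + h.[2,1] * (2*u1*u2*u3*v1 + u1^2*u3*v2 + u1^2*u2*v3) + h.[2,2] * (2*u1*u2^2*v1 + 2*u1^2*u2*v2) + h.[3,0] * (3*u1^2*u3*v1 + u1^3*v3) + h.[3,1] * (3*u1^2*u2*v1 + u1^3*v2) + h.[4,0] * (4*u1^3*v1)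
  | 4%nat, 0%nat => h.[0,0] * (u3^4) + h.[0,1] * (u2*u3^3) + h.[0,2] * (u2^2*u3^2) + h.[0,3] * (u2^3*u3) + h.[0,4] * (u2^4) + h.[1,0] * (u1*u3^3) + h.[1,1] * (u1*u2*u3^2) + h.[1,2] * (u1*u2^2*u3) + h.[1,3] * (u1*u2^3) + h.[2,0] * (u1^2*u3^2) + h.[2,1] * (u1^2*u2*u3) + h.[2,2] * (u1^2*u2^2) + h.[3,0] * (u1^3*u3) + h.[3,1] * (u1^3*u2) + h.[4,0] * (u1^4)
  | _, _ => 0
  end.

Lemma ev_pullback (A : coords) (h : form) (x y z : R) :
  ev h (apply A x y z) = ev (pullback A h) ((x, y), z).
Proof.
  destruct A as [[[u1 u2] u3] [[v1 v2] v3] [[w1 w2] w3]].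
  unfold ev, pullback, apply, vx, vy, vz; simpl. ring.
Qed.

Lemma quartic_poly_zero (c0 c1 c2 c3 c4 : R) :
  (forall x, c0 + c1 * x + c2 * x ^ 2 + c3 * x ^ 3 + c4 * x ^ 4 = 0) ->
  c0 = 0 /\ c1 = 0 /\ c2 = 0 /\ c3 = 0 /\ c4 = 0.
Proof.
  intros H.
  pose proof (H 0); pose proof (H 1); pose proof (H (-1)); pose proof (H 2); pose proof (H (-2)).
  simpl in *. lra.
Qed.

Lemma feq_of_chart (c d : form) :
  (forall x y, ev c ((x, y), 1) = ev d ((x, y), 1)) -> feq c d.
Proof.
  intros H.
  set (e := fun i j => c i j - d i j).
  assert (Hx : forall y x,
    (e.[0,0] + e.[0,1] * y + e.[0,2] * y^2 + e.[0,3] * y^3 + e.[0,4] * y^4)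
    + (e.[1,0] + e.[1,1] * y + e.[1,2] * y^2 + e.[1,3] * y^3 + 0 * y^4) * x
    + (e.[2,0] + e.[2,1] * y + e.[2,2] * y^2 + 0 * y^3 + 0 * y^4) * x^2
    + (e.[3,0] + e.[3,1] * y + 0 * y^2 + 0 * y^3 + 0 * y^4) * x^3
    + (e.[4,0] + 0 * y + 0 * y^2 + 0 * y^3 + 0 * y^4) * x^4 = 0).
  { intros y x. specialize (H x y).
    transitivity (ev c ((x, y), 1) - ev d ((x, y), 1)); [|lra].
    unfold e; unfold_ev; ring. }
  assert (Hy := fun y => quartic_poly_zero _ _ _ _ _ (Hx y)).
  destruct (quartic_poly_zero _ _ _ _ _ (fun y => proj1 (Hy y))) as [? [? [? [? ?]]]].
  destruct (quartic_poly_zero _ _ _ _ _ (fun y => proj1 (proj2 (Hy y)))) as [? [? [? [? ?]]]].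
  destruct (quartic_poly_zero _ _ _ _ _ (fun y => proj1 (proj2 (proj2 (Hy y)))))
    as [? [? [? [? ?]]]].
  destruct (quartic_poly_zero _ _ _ _ _ (fun y => proj1 (proj2 (proj2 (proj2 (Hy y))))))
    as [? [? [? [? ?]]]].
  destruct (quartic_poly_zero _ _ _ _ _ (fun y => proj2 (proj2 (proj2 (proj2 (Hy y))))))
    as [? [? [? [? ?]]]].
  unfold e in *. intros i j Hij.
  destruct i as [|[|[|[|[|i]]]]]; destruct j as [|[|[|[|[|j]]]]]; try lia; lra.
Qed.

Lemma ev_comb (r : R) (f g : form) (v : V3) :
  ev (fun i j => r * f i j + g i j) v = r * ev f v + ev g v.
Proof. destruct v as [[a b] c]. unfold_ev. ring. Qed.

Lemma ev_scal (f : form) (r : R) (v : V3) : ev f (vscal r v) = r ^ 4 * ev f v.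
Proof. destruct v as [[a b] c]. unfold_ev. ring. Qed.

Lemma ev_feq (f g : form) (v : V3) : feq f g -> ev f v = ev g v.
Proof. intros H. destruct v as [[a b] c]. unfold_ev. rewrite !H by (simpl; lia). ring. Qed.

Lemma loc_coeffs_pullback (A : coords) (h : form) : loc_coeffs A h (pullback A h).
Proof. intros x y. rewrite ev_pullback. unfold_ev. ring. Qed.

Lemma loc_coeffs_unique (A : coords) (h : form) (a : nat -> nat -> R) :
  loc_coeffs A h a -> feq a (pullback A h).
Proof.
  intros H. apply feq_of_chart. intros x y. rewrite <- ev_pullback, H. unfold_ev. ring.
Qed.

Lemma pullback_feq (A : coords) (h1 h2 : form) : feq h1 h2 -> feq (pullback A h1) (pullback A h2).
Proof.
  intros H. apply feq_of_chart. intros x y. rewrite <- !ev_pullback. apply ev_feq, H.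
Qed.

Lemma pullback_comb (A : coords) (r : R) (f g : form) :
  feq (pullback A (fun i j => r * f i j + g i j))
      (fun i j => r * pullback A f i j + pullback A g i j).
Proof.
  apply feq_of_chart. intros x y.
  rewrite <- ev_pullback, ev_comb, !ev_pullback, ev_comb. reflexivity.
Qed.

Lemma pullback_lincomb_zero (A : coords) (l : list (R * form)) (i j : nat) :
  (i + j <= 4)%nat ->
  (forall rh, In rh l -> pullback A (snd rh) i j = 0) -> pullback A (lincomb l) i j = 0.
Proof.
  intros Hij. induction l as [|[r h] l IH]; intros H.
  - unfold lincomb, pullback; simpl.
    destruct i as [|[|[|[|[|i]]]]]; destruct j as [|[|[|[|[|j]]]]]; simpl; ring.
  - assert (E : feq (lincomb ((r, h) :: l)) (fun i j => r * h i j + lincomb l i j))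
      by (intros a b _; reflexivity).
    rewrite (pullback_feq A _ _ E i j Hij), (pullback_comb A r h (lincomb l) i j Hij).
    pose proof (H (r, h) (or_introl eq_refl)) as Hh. simpl in Hh.
    rewrite Hh, IH; [ring|].
    intros rh Hrh. apply H. right. exact Hrh.
Qed.

(** Coordinates of [v] in the basis formed by the columns of [A]
    (Cramer's rule). *)
Definition det3v (a b c : V3) : R := det3 (mkCoords a b c).

Definition coordsOf (A : coords) (v : V3) : V3 :=
  ((det3v v (col2 A) (col3 A) / det3 A, det3v (col1 A) v (col3 A) / det3 A),
    det3v (col1 A) (col2 A) v / det3 A).

Definition applyv (A : coords) (w : V3) : V3 := apply A (vx w) (vy w) (vz w).

Lemma applyv_coordsOf (A : coords) (v : V3) : det3 A <> 0 -> applyv A (coordsOf A v) = v.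
Proof.
  destruct A as [[[u1 u2] u3] [[v1 v2] v3] [[w1 w2] w3]]. destruct v as [[a b] c].
  unfold applyv, coordsOf, apply, det3v, det3, vx, vy, vz; simpl. intros H.
  f_equal; [f_equal|]; field; exact H.
Qed.

(** The change of charts from [A] to [A']: the matrix [A^-1 A']. *)
Definition chart_change (A A' : coords) : coords :=
  mkCoords (coordsOf A (col1 A')) (coordsOf A (col2 A')) (coordsOf A (col3 A')).

Lemma apply_chart_change (A A' : coords) (x y z : R) : det3 A <> 0 ->
  apply A' x y z = applyv A (apply (chart_change A A') x y z).
Proof.
  intros H.
  pose proof (applyv_coordsOf A (col1 A') H) as E1.
  pose proof (applyv_coordsOf A (col2 A') H) as E2.
  pose proof (applyv_coordsOf A (col3 A') H) as E3.
  destruct A' as [c1 c2 c3]. unfold chart_change. simpl in *. revert E1 E2 E3.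
  generalize (coordsOf A c1) (coordsOf A c2) (coordsOf A c3).
  intros m1 m2 m3 E1 E2 E3. subst c1 c2 c3.
  destruct A as [[[u1 u2] u3] [[v1 v2] v3] [[w1 w2] w3]].
  destruct m1 as [[a1 a2] a3]; destruct m2 as [[b1 b2] b3]; destruct m3 as [[d1 d2] d3].
  unfold applyv, apply, vx, vy, vz; simpl. f_equal; [f_equal|]; ring.
Qed.

Lemma pullback_chart_change (A A' : coords) (h : form) : det3 A <> 0 ->
  feq (pullback A' h) (pullback (chart_change A A') (pullback A h)).
Proof.
  intros H. apply feq_of_chart. intros x y.
  rewrite <- !ev_pullback, (apply_chart_change A A' x y 1 H).
  unfold applyv. rewrite ev_pullback. reflexivity.
Qed.

(** * Local vanishing conditions and their independence of the chart *)

(** The local equations of [I_s] (ord >= 2 at the origin of the chart) and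
    of [I_(p,l)] when [l = {y = 0}], on the coefficients of a form. *)
Definition vanish_pt (c : form) : Prop := c.[0,0] = 0 /\ c.[1,0] = 0 /\ c.[0,1] = 0.
Definition vanish_fl (c : form) : Prop :=
  vanish_pt c /\ c.[2,0] = 0 /\ c.[1,1] = 0 /\ c.[3,0] = 0.

(** A linear change of coordinates fixing the point (0:0:1) preserves
    [vanish_pt]; if it moreover fixes the line [y = 0], it preserves
    [vanish_fl]. *)
Lemma vanish_pt_pullback (M : coords) (b : form) :
  vx (col3 M) = 0 -> vy (col3 M) = 0 -> vanish_pt b -> vanish_pt (pullback M b).
Proof.
  destruct M as [[[u1 u2] u3] [[v1 v2] v3] [[w1 w2] w3]].
  unfold vx, vy; simpl. intros -> -> [H0 [H1 H2]].
  unfold vanish_pt, pullback, vx, vy, vz; simpl. rewrite H0, H1, H2. repeat split; ring.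
Qed.

Lemma vanish_fl_pullback (M : coords) (b : form) :
  vx (col3 M) = 0 -> vy (col3 M) = 0 -> vy (col1 M) = 0 ->
  vanish_fl b -> vanish_fl (pullback M b).
Proof.
  destruct M as [[[u1 u2] u3] [[v1 v2] v3] [[w1 w2] w3]].
  unfold vx, vy; simpl. intros -> -> -> [[H0 [H1 H2]] [H3 [H4 H5]]].
  unfold vanish_fl, vanish_pt, pullback, vx, vy, vz; simpl.
  rewrite H0, H1, H2, H3, H4, H5. repeat split; ring.
Qed.

Lemma coordsOf_center (A : coords) (p t : V3) :
  centered A p -> proj_eq p t ->
  vx (coordsOf A t) = 0 /\ vy (coordsOf A t) = 0 /\ vz (coordsOf A t) <> 0.
Proof.
  intros [HD [r [Hr E3]]] [l [Hl Et]].
  destruct A as [c1 c2 c3]. simpl in *. subst c3 t.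
  destruct c1 as [[a1 a2] a3]; destruct c2 as [[b1 b2] b3]; destruct p as [[p1 p2] p3].
  unfold coordsOf, det3v, det3, vscal, vx, vy, vz in *; simpl in *.
  split; [|split].
  - unfold Rdiv; match goal with |- ?n * _ = 0 => replace n with 0 by ring end; ring.
  - unfold Rdiv; match goal with |- ?n * _ = 0 => replace n with 0 by ring end; ring.
  - replace (a1 * (b2 * (l * p3) - b3 * (l * p2)) - b1 * (a2 * (l * p3) - a3 * (l * p2))
             + l * p1 * (a2 * b3 - a3 * b2))
      with (l / r * (a1 * (b2 * (r * p3) - b3 * (r * p2)) - b1 * (a2 * (r * p3) - a3 * (r * p2))
             + r * p1 * (a2 * b3 - a3 * b2))) by (field; exact Hr).
    apply Rmult_integral_contrapositive; split; [|now apply Rinv_neq_0_compat].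
    apply Rmult_integral_contrapositive; split; [|exact HD].
    apply Rmult_integral_contrapositive; split; [exact Hl|now apply Rinv_neq_0_compat].
Qed.

Lemma det_orth (a b c L : V3) : L <> v0 -> vdot L a = 0 -> vdot L b = 0 -> vdot L c = 0 ->
  det3v a b c = 0.
Proof.
  destruct a as [[a1 a2] a3]; destruct b as [[b1 b2] b3]; destruct c as [[c1 c2] c3];
  destruct L as [[l1 l2] l3].
  unfold det3v, det3, vdot, v0, vx, vy, vz; simpl. intros HL Ha Hb Hc.
  set (D := a1 * (b2 * c3 - b3 * c2) - b1 * (a2 * c3 - a3 * c2) + c1 * (a2 * b3 - a3 * b2)).
  assert (E1 : D * l1 = (l1*a1+l2*a2+l3*a3) * (b2*c3-b3*c2) + (l1*b1+l2*b2+l3*b3) * (c2*a3-c3*a2)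
       + (l1*c1+l2*c2+l3*c3) * (a2*b3-a3*b2)) by (unfold D; ring).
  assert (E2 : D * l2 = (l1*a1+l2*a2+l3*a3) * (b3*c1-b1*c3) + (l1*b1+l2*b2+l3*b3) * (c3*a1-c1*a3)
       + (l1*c1+l2*c2+l3*c3) * (a3*b1-a1*b3)) by (unfold D; ring).
  assert (E3 : D * l3 = (l1*a1+l2*a2+l3*a3) * (b1*c2-b2*c1) + (l1*b1+l2*b2+l3*b3) * (c1*a2-c2*a1)
       + (l1*c1+l2*c2+l3*c3) * (a1*b2-a2*b1)) by (unfold D; ring).
  rewrite Ha, Hb, Hc in E1, E2, E3.
  destruct (Req_dec D 0) as [|HD]; [assumption|exfalso]. apply HL.
  assert (l1 = 0) by (apply (Rmult_eq_reg_l D); lra).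
  assert (l2 = 0) by (apply (Rmult_eq_reg_l D); lra).
  assert (l3 = 0) by (apply (Rmult_eq_reg_l D); lra).
  subst; reflexivity.
Qed.

Lemma chart_change_center (A A' : coords) (p : V3) : centered A p -> centered A' p ->
  vx (col3 (chart_change A A')) = 0 /\ vy (col3 (chart_change A A')) = 0.
Proof.
  intros HA [_ HA']. destruct (coordsOf_center A p (col3 A') HA HA') as [H1 [H2 _]].
  simpl. auto.
Qed.

Lemma chart_change_line (A A' : coords) (p L : V3) : L <> v0 ->
  centered_line A p L -> centered_line A' p L -> vy (col1 (chart_change A A')) = 0.
Proof.
  intros HL [_ [Ha1 Ha3]] [_ [Hb1 _]]. simpl. unfold coordsOf, vy; simpl.
  rewrite (det_orth (col1 A) (col1 A') (col3 A) L HL Ha1 Hb1 Ha3). unfold Rdiv; ring.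
Qed.

Lemma vanish_pt_transfer (A A' : coords) (p : V3) (h : form) :
  centered A p -> centered A' p ->
  vanish_pt (pullback A h) -> vanish_pt (pullback A' h).
Proof.
  intros HA HA' Hp. destruct (chart_change_center A A' p HA HA') as [E1 E2].
  pose proof (pullback_chart_change A A' h (proj1 HA)) as Hc.
  destruct (vanish_pt_pullback _ _ E1 E2 Hp) as [P0 [P1 P2]].
  unfold vanish_pt. rewrite !Hc by (simpl; lia). auto.
Qed.

Lemma vanish_fl_transfer (A A' : coords) (p L : V3) (h : form) : L <> v0 ->
  centered_line A p L -> centered_line A' p L ->
  vanish_fl (pullback A h) -> vanish_fl (pullback A' h).
Proof.
  intros HL HA HA' Hp. destruct (chart_change_center A A' p (proj1 HA) (proj1 HA')) as [E1 E2].
  pose proof (chart_change_line A A' p L HL HA HA') as E3.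
  pose proof (pullback_chart_change A A' h (proj1 (proj1 HA))) as Hc.
  destruct (vanish_fl_pullback _ _ E1 E2 E3 Hp) as [[P0 [P1 P2]] [P3 [P4 P5]]].
  unfold vanish_fl, vanish_pt. rewrite !Hc by (simpl; lia). auto 10.
Qed.

Lemma pullback_origin (A : coords) (h : form) : (pullback A h).[0,0] = ev h (col3 A).
Proof.
  transitivity (ev (pullback A h) ((0, 0), 1)); [unfold_ev; ring|].
  rewrite <- ev_pullback. f_equal. destruct A as [c1 c2 [[w1 w2] w3]].
  unfold apply, vx, vy, vz; simpl. f_equal; [f_equal|]; ring.
Qed.

Lemma zero_at_center (A : coords) (z : V3) (h : form) : centered A z ->
  (ev h z = 0 <-> (pullback A h).[0,0] = 0).
Proof.
  intros [_ [r [Hr E]]]. rewrite pullback_origin, E, ev_scal. split; intros H.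
  - rewrite H. ring.
  - apply Rmult_integral in H as [H|H]; [|exact H].
    exfalso. exact (pow_nonzero r 4 Hr H).
Qed.

Lemma vanish_pt_of_ord_ge2 (A : coords) (h : form) (a : nat -> nat -> R) :
  loc_coeffs A h a -> ord_ge2 a -> vanish_pt (pullback A h).
Proof.
  intros Hl [H0 [H1 H2]]. pose proof (loc_coeffs_unique A h a Hl) as U.
  unfold vanish_pt. rewrite <- !U by (simpl; lia). auto.
Qed.

(** * Consequences of nonnegativity for local coefficients *)

Lemma limit_nonneg (k : nat) (G : R -> R) :
  continuity_pt G 0 -> (forall x, 0 < x < 1 -> 0 <= x ^ k * G x) -> 0 <= G 0.
Proof.
  intros HG H. destruct (Rle_or_lt 0 (G 0)) as [|Hneg]; [assumption|exfalso].
  destruct (HG (- G 0) ltac:(lra)) as [d [Hd Hnear]].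
  set (x := Rmin (d / 2) (1 / 2)).
  assert (Hx : 0 < x < 1) by (unfold x; split; [apply Rmin_glb_lt|pose proof (Rmin_r (d/2) (1/2))]; lra).
  assert (HGx : G x < 0).
  { assert (Hd' : Rabs (G x - G 0) < - G 0).
    { apply Hnear. split; [split; [exact I|apply Rlt_not_eq; lra]|].
      simpl. unfold R_dist. rewrite Rminus_0_r, Rabs_right by lra.
      pose proof (Rmin_l (d / 2) (1 / 2)). fold x in H0. lra. }
    pose proof (Rle_abs (G x - G 0)). lra. }
  specialize (H x Hx). pose proof (pow_lt x k (proj1 Hx)). nra.
Qed.

(** If [x^(2k+1) (a + x F(x)) >= 0] for all [x], [F] continuous at [0],
    then [a = 0]: an odd leading term cannot keep a constant sign. *)
Lemma odd_leading_zero (k : nat) (a : R) (F : R -> R) : continuity_pt F 0 ->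
  (forall x, 0 <= x ^ (2 * k + 1) * (a + x * F x)) -> a = 0.
Proof.
  intros HF H.
  assert (Hodd : forall x, (- x) ^ (2 * k + 1) = - x ^ (2 * k + 1)).
  { intros x. rewrite !pow_add, !pow_mult. replace ((- x) ^ 2) with (x ^ 2) by ring. ring. }
  assert (Hpos : 0 <= a + 0 * F 0).
  { apply (limit_nonneg (2 * k + 1) (fun x => a + x * F x)).
    - reg.
    - intros x _. apply H. }
  assert (Hneg : 0 <= - (a + - 0 * F (- 0))).
  { apply (limit_nonneg (2 * k + 1) (fun x => - (a + - x * F (- x)))).
    - reg. rewrite Ropp_0. exact HF.
    - intros x _. specialize (H (- x)). rewrite Hodd in H. lra. }
  lra.
Qed.

Lemma quad_nonneg_discr (a b c : R) : 0 <= a -> (forall t, 0 <= a * t ^ 2 + b * t + c) ->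
  b ^ 2 <= 4 * a * c.
Proof.
  intros Ha H. destruct (Rle_lt_or_eq_dec 0 a Ha) as [Ha'|<-].
  - specialize (H (- b / (2 * a))).
    replace (a * (- b / (2 * a)) ^ 2 + b * (- b / (2 * a)) + c)
      with ((4 * a * c - b ^ 2) / (4 * a)) in H by (field; lra).
    apply (Rmult_le_compat_r (4 * a)) in H; [|lra].
    replace ((4 * a * c - b ^ 2) / (4 * a) * (4 * a)) with (4 * a * c - b ^ 2) in H
      by (field; lra). lra.
  - destruct (Req_dec b 0) as [->|Hb]; [lra|exfalso].
    specialize (H (- (c + 1) / b)).
    replace (0 * (- (c + 1) / b) ^ 2 + b * (- (c + 1) / b) + c) with (-1) in H
      by (field; exact Hb). lra.
Qed.

Section NonnegForm.
Variable c : form.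
Hypothesis Hc : psd c.

Lemma psd_vanish_pt : c.[0,0] = 0 -> vanish_pt c.
Proof.
  intros H0. split; [exact H0|split].
  - apply (odd_leading_zero 0 _ (fun x => c.[2,0] + c.[3,0] * x + c.[4,0] * x ^ 2)); [reg|].
    intros x. replace (x ^ (2 * 0 + 1) * (c.[1,0] + x * (c.[2,0] + c.[3,0] * x + c.[4,0] * x ^ 2)))
      with (ev c ((x, 0), 1)) by (unfold_ev; rewrite H0; ring). apply Hc.
  - apply (odd_leading_zero 0 _ (fun x => c.[0,2] + c.[0,3] * x + c.[0,4] * x ^ 2)); [reg|].
    intros x. replace (x ^ (2 * 0 + 1) * (c.[0,1] + x * (c.[0,2] + c.[0,3] * x + c.[0,4] * x ^ 2)))
      with (ev c ((0, x), 1)) by (unfold_ev; rewrite H0; ring). apply Hc.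
Qed.

Lemma psd_quadratic_part : vanish_pt c ->
  forall u w, 0 <= c.[2,0] * u ^ 2 + c.[1,1] * u * w + c.[0,2] * w ^ 2.
Proof.
  intros [H0 [H1 H2]] u w.
  set (q := c.[2,0] * u ^ 2 + c.[1,1] * u * w + c.[0,2] * w ^ 2).
  set (G := fun x => q
     + x * ((c.[3,0] * u ^ 3 + c.[2,1] * u ^ 2 * w + c.[1,2] * u * w ^ 2 + c.[0,3] * w ^ 3)
     + x * (c.[4,0] * u ^ 4 + c.[3,1] * u ^ 3 * w + c.[2,2] * u ^ 2 * w ^ 2
            + c.[1,3] * u * w ^ 3 + c.[0,4] * w ^ 4))).
  replace q with (G 0) by (unfold G; ring).
  apply (limit_nonneg 2); [unfold G; reg|].
  intros x _. replace (x ^ 2 * G x) with (ev c ((x * u, x * w), 1))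
    by (unfold G, q; unfold_ev; rewrite H0, H1, H2; ring). apply Hc.
Qed.

Lemma psd_vanish_fl : vanish_pt c -> c.[2,0] = 0 -> vanish_fl c.
Proof.
  intros Hv H20. pose proof (psd_quadratic_part Hv) as Q.
  destruct Hv as [H0 [H1 H2]]. split; [repeat split; assumption|]. split; [exact H20|split].
  - apply (odd_leading_zero 0 _ (fun _ => c.[0,2])); [reg|].
    intros x. replace (x ^ (2 * 0 + 1) * (c.[1,1] + x * c.[0,2]))
      with (c.[2,0] * 1 ^ 2 + c.[1,1] * 1 * x + c.[0,2] * x ^ 2) by (simpl; rewrite H20; ring).
    apply Q.
  - apply (odd_leading_zero 1 _ (fun _ => c.[4,0])); [reg|].
    intros x. replace (x ^ (2 * 1 + 1) * (c.[3,0] + x * c.[4,0]))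
      with (ev c ((x, 0), 1)) by (unfold_ev; rewrite H0, H1, H20; ring). apply Hc.
Qed.

(** Under the [I_(p,l)] pattern, the weighted-homogeneous leading part
    [c02 y^2 + c21 x^2 y + c40 x^4] (weights 1 for x, 2 for y) is
    nonnegative. *)
Lemma psd_weighted_part : vanish_fl c ->
  forall t, 0 <= c.[0,2] * t ^ 2 + c.[2,1] * t + c.[4,0].
Proof.
  intros [[H0 [H1 H2]] [H3 [H4 H5]]] t.
  set (q := c.[0,2] * t ^ 2 + c.[2,1] * t + c.[4,0]).
  set (G := fun x => q + x * (c.[1,2] * t ^ 2 + c.[3,1] * t + x * (c.[0,3] * t ^ 3 + c.[2,2] * t ^ 2)
      + x ^ 2 * (c.[1,3] * t ^ 3) + x ^ 3 * (c.[0,4] * t ^ 4))).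
  replace q with (G 0) by (unfold G; ring).
  apply (limit_nonneg 4); [unfold G; reg|].
  intros x _. replace (x ^ 4 * G x) with (ev c ((x, t * x ^ 2), 1))
    by (unfold G, q; unfold_ev; rewrite H0, H1, H2, H3, H4, H5; ring). apply Hc.
Qed.

End NonnegForm.

Lemma psd_pullback (A : coords) (h : form) : psd h -> psd (pullback A h).
Proof. intros H [[x y] z]. rewrite <- ev_pullback. apply H. Qed.

(** [F_s] is contained in [I_s]: a nonnegative form is singular at its zeros. *)
Lemma F_pt_vanish (A : coords) (z : V3) (h : form) :
  psd h -> centered A z -> ev h z = 0 -> vanish_pt (pullback A h).
Proof.
  intros Hp Hc Hz. apply (psd_vanish_pt _ (psd_pullback A h Hp)).
  exact (proj1 (zero_at_center A z h Hc) Hz).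
Qed.

Lemma F_fl_vanish (A : coords) (p L : V3) (h : form) : L <> v0 ->
  F_fl p L h -> centered_line A p L -> vanish_fl (pullback A h).
Proof.
  intros HL [Hp [Hz [A' [a [HA' [Hl H20]]]]]] HA.
  apply (vanish_fl_transfer A' A p L h HL HA' HA).
  apply (psd_vanish_fl _ (psd_pullback A' h Hp)).
  - exact (F_pt_vanish A' p h Hp (proj1 HA') Hz).
  - rewrite <- (loc_coeffs_unique A' h a Hl) by (simpl; lia). exact H20.
Qed.

Lemma I_pt_vanish (A : coords) (s : V3) (h : form) :
  I_pt s h -> centered A s -> vanish_pt (pullback A h).
Proof.
  intros [A' [a [HA' [Hl Ho]]]] HA.
  exact (vanish_pt_transfer A' A s h HA' HA (vanish_pt_of_ord_ge2 A' h a Hl Ho)).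
Qed.

Lemma I_fl_vanish (A : coords) (p L : V3) (h : form) : L <> v0 ->
  I_fl p L h -> centered_line A p L -> vanish_fl (pullback A h).
Proof.
  intros HL [A' [a [HA' [Hl [Ho [H20 [H11 H30]]]]]]] HA.
  apply (vanish_fl_transfer A' A p L h HL HA' HA).
  split; [exact (vanish_pt_of_ord_ge2 A' h a Hl Ho)|].
  rewrite <- !(loc_coeffs_unique A' h a Hl) by (simpl; lia). auto.
Qed.

Definition pos_def (a b c : R) : Prop := 0 < a /\ 0 < c /\ b ^ 2 < 4 * a * c.

Lemma pos_def_of_pos (a b c : R) :
  (forall u w, (u <> 0 \/ w <> 0) -> 0 < a * u ^ 2 + b * u * w + c * w ^ 2) -> pos_def a b c.
Proof.
  intros H.
  assert (Ha : 0 < a) by (specialize (H 1 0 (or_introl R1_neq_R0)); lra).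
  assert (Hc : 0 < c) by (specialize (H 0 1 (or_intror R1_neq_R0)); lra).
  split; [exact Ha|split; [exact Hc|]].
  specialize (H (- b / (2 * a)) 1 (or_intror R1_neq_R0)).
  replace (a * (- b / (2 * a)) ^ 2 + b * (- b / (2 * a)) * 1 + c * 1 ^ 2)
    with ((4 * a * c - b ^ 2) / (4 * a)) in H by (field; lra).
  apply (Rmult_lt_compat_r (4 * a)) in H; [|lra].
  replace ((4 * a * c - b ^ 2) / (4 * a) * (4 * a)) with (4 * a * c - b ^ 2) in H
    by (field; lra). lra.
Qed.

Lemma pos_def_of_nondegenerate (a b c : R) : 0 <= a ->
  (forall t, 0 <= a * t ^ 2 + b * t + c) -> b ^ 2 <> 4 * a * c -> pos_def a b c.
Proof.
  intros Ha H Hd. pose proof (quad_nonneg_discr a b c Ha H) as Hle.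
  pose proof (pow2_ge_0 b). assert (Hlt : b ^ 2 < 4 * a * c) by lra.
  assert (Ha' : 0 < a) by (destruct (Rle_lt_or_eq_dec 0 a Ha) as [|<-]; [assumption|lra]).
  split; [exact Ha'|split; [|exact Hlt]].
  destruct (Rlt_or_le 0 c) as [|Hc]; [assumption|].
  assert (a * c <= 0) by (rewrite <- (Rmult_0_r a); apply Rmult_le_compat_l; lra). lra.
Qed.

Lemma pos_def_at_pt (A : coords) (f : form) (a : nat -> nat -> R) :
  psd f -> loc_coeffs A f a -> ord_ge2 a ->
  (forall u w : R, (u <> 0 \/ w <> 0) ->
      a.[2,0] * u ^ 2 + a.[1,1] * u * w + a.[0,2] * w ^ 2 <> 0) ->
  pos_def (pullback A f).[2,0] (pullback A f).[1,1] (pullback A f).[0,2].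
Proof.
  intros Hp Hl Ho Hnz. pose proof (loc_coeffs_unique A f a Hl) as U.
  rewrite !U in Hnz by (simpl; lia).
  apply pos_def_of_pos. intros u w Huw. specialize (Hnz u w Huw).
  pose proof (psd_quadratic_part _ (psd_pullback A f Hp)
                (vanish_pt_of_ord_ge2 A f a Hl Ho) u w). lra.
Qed.

(** Hypotheses (3)-(4) at [p_j]: in a chart adapted to [(p_j, l_j)], the
    weighted leading part [c02 y^2 + c21 x^2 y + c40 x^4] is positive
    definite as a quadratic form in [(y, x^2)], because [D_f''(0) = 2 (c21^2
    - 4 c02 c40)] is nonzero. *)
Lemma pos_def_at_fl (A : coords) (f : form) (a : nat -> nat -> R) :
  psd f -> loc_coeffs A f a -> D2 a <> 0 -> vanish_fl (pullback A f) ->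
  pos_def (pullback A f).[0,2] (pullback A f).[2,1] (pullback A f).[4,0].
Proof.
  intros Hp Hl HD Hv. pose proof (loc_coeffs_unique A f a Hl) as U.
  unfold D2, Dcoef, hcoef in HD. simpl in HD. rewrite !U in HD by (simpl; lia).
  pose proof (psd_pullback A f Hp) as Hc.
  set (c := pullback A f) in *. clearbody c.
  pose proof (psd_weighted_part c Hc Hv) as W.
  destruct Hv as [Hv [H20 [H11 H30]]]. rewrite H20, H11, H30 in HD.
  pose proof (psd_quadratic_part c Hc Hv 0 1) as Q.
  replace (c.[2,0] * 0 ^ 2 + c.[1,1] * 0 * 1 + c.[0,2] * 1 ^ 2) with c.[0,2] in Q by ring.
  apply (pos_def_of_nondegenerate _ _ _ Q W).
  intros E. apply HD. nra.
Qed.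

(** * Local nonnegativity of [f + eps g] near a zero of [f] *)

Lemma pos_def_coercive (a b c : R) : pos_def a b c ->
  exists kap, 0 < kap /\ forall u v, kap * (u ^ 2 + v ^ 2) <= a * u ^ 2 + b * u * v + c * v ^ 2.
Proof.
  intros [Ha [Hc Hd]].
  exists ((4 * a * c - b ^ 2) / (4 * (a + c))). split; [apply Rdiv_lt_0_compat; lra|].
  intros u v.
  assert (E : 4 * (a + c) * (a * u ^ 2 + b * u * v + c * v ^ 2) - (4 * a * c - b ^ 2) * (u ^ 2 + v ^ 2)
     = (2 * a * u + b * v) ^ 2 + (2 * c * v + b * u) ^ 2) by ring.
  pose proof (pow2_ge_0 (2 * a * u + b * v)); pose proof (pow2_ge_0 (2 * c * v + b * u)).
  apply (Rmult_le_reg_l (4 * (a + c))); [lra|].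
  replace (4 * (a + c) * ((4 * a * c - b ^ 2) / (4 * (a + c)) * (u ^ 2 + v ^ 2)))
    with ((4 * a * c - b ^ 2) * (u ^ 2 + v ^ 2)) by (field; lra). lra.
Qed.

Lemma abs_term (a m B : R) : Rabs m <= B -> - (Rabs a * B) <= a * m.
Proof.
  intros H. assert (Rabs (a * m) <= Rabs a * B)
    by (rewrite Rabs_mult; apply Rmult_le_compat_l; [apply Rabs_pos|exact H]).
  pose proof (Rle_abs (- (a * m))). rewrite Rabs_Ropp in H1. lra.
Qed.

Lemma quad_lower_bound (a b c u v : R) :
  - ((Rabs a + Rabs b + Rabs c) * (u ^ 2 + v ^ 2)) <= a * u ^ 2 + b * u * v + c * v ^ 2.
Proof.
  pose proof (pow2_ge_0 u); pose proof (pow2_ge_0 v).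
  assert (Huv : Rabs (u * v) <= u ^ 2 + v ^ 2).
  { rewrite Rabs_mult. pose proof (pow2_abs u); pose proof (pow2_abs v).
    pose proof (pow2_ge_0 (Rabs u - Rabs v)). nra. }
  assert (Hu : Rabs (u ^ 2) <= u ^ 2 + v ^ 2) by (rewrite Rabs_right; lra).
  assert (Hv : Rabs (v ^ 2) <= u ^ 2 + v ^ 2) by (rewrite Rabs_right; lra).
  pose proof (abs_term a _ _ Hu); pose proof (abs_term b _ _ Huv); pose proof (abs_term c _ _ Hv).
  lra.
Qed.

Definition K5 (a1 a2 a3 a4 a5 : R) : R := Rabs a1 + Rabs a2 + Rabs a3 + Rabs a4 + Rabs a5.

Lemma K5_nonneg (a1 a2 a3 a4 a5 : R) : 0 <= K5 a1 a2 a3 a4 a5.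
Proof.
  unfold K5. pose proof (Rabs_pos a1); pose proof (Rabs_pos a2); pose proof (Rabs_pos a3);
  pose proof (Rabs_pos a4); pose proof (Rabs_pos a5). lra.
Qed.

Lemma small_tail (a1 a2 a3 a4 a5 x y r : R) : Rabs x <= r -> Rabs y <= r -> r <= 1 ->
  - (K5 a1 a2 a3 a4 a5 * r) <= a1 * x + a2 * y + a3 * (x * x) + a4 * (x * y) + a5 * (y * y).
Proof.
  intros Hx Hy Hr.
  assert (Hmul : forall a b, Rabs a <= r -> Rabs b <= r -> Rabs (a * b) <= r).
  { intros a b Ha Hb. rewrite Rabs_mult. pose proof (Rabs_pos a); pose proof (Rabs_pos b).
    apply Rle_trans with (r * 1); [apply Rmult_le_compat|]; lra. }
  pose proof (abs_term a1 x r Hx). pose proof (abs_term a2 y r Hy).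
  pose proof (abs_term a3 (x * x) r (Hmul _ _ Hx Hx)).
  pose proof (abs_term a4 (x * y) r (Hmul _ _ Hx Hy)).
  pose proof (abs_term a5 (y * y) r (Hmul _ _ Hy Hy)). unfold K5. lra.
Qed.

Lemma box_perturbation (w Q F G : R -> R -> R) (kap K Kd : R) :
  0 < kap -> 0 <= K -> 0 <= Kd ->
  (forall x y, 0 <= w x y) -> (forall x y, kap * w x y <= Q x y) ->
  (forall r x y, r <= 1 -> Rabs x <= r -> Rabs y <= r -> Q x y - K * r * w x y <= F x y) ->
  (forall x y, Rabs x <= 1 -> Rabs y <= 1 -> - (Kd * w x y) <= G x y) ->
  exists r, 0 < r /\ exists eps, 0 < eps /\
    forall x y, Rabs x <= r -> Rabs y <= r -> 0 <= F x y + eps * G x y.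
Proof.
  intros Hk HK HKd Hw HQ HF HG.
  set (r := Rmin 1 (kap / (2 * K + 1))). set (eps := kap / (2 * Kd + 1)).
  assert (Hr1 : r <= 1) by apply Rmin_l.
  assert (HrK : K * r <= kap / 2).
  { apply Rle_trans with (K * (kap / (2 * K + 1))); [apply Rmult_le_compat_l; [lra|apply Rmin_r]|].
    apply (Rmult_le_reg_r (2 * K + 1)); [lra|].
    replace (K * (kap / (2 * K + 1)) * (2 * K + 1)) with (K * kap) by (field; lra). nra. }
  assert (HeK : eps * Kd <= kap / 2).
  { unfold eps. apply (Rmult_le_reg_r (2 * Kd + 1)); [lra|].
    replace (kap / (2 * Kd + 1) * Kd * (2 * Kd + 1)) with (kap * Kd) by (field; lra). nra. }
  exists r. split; [apply Rmin_glb_lt; [lra|apply Rdiv_lt_0_compat; lra]|].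
  exists eps. split; [apply Rdiv_lt_0_compat; lra|].
  intros x y Hx Hy.
  specialize (HF r x y Hr1 Hx Hy). specialize (HG x y ltac:(lra) ltac:(lra)).
  specialize (HQ x y). specialize (Hw x y).
  assert (0 <= eps) by (unfold eps; apply Rlt_le, Rdiv_lt_0_compat; lra).
  assert (eps * G x y >= - (eps * Kd) * w x y) by nra.
  assert (0 <= (kap - K * r - eps * Kd) * w x y) by (apply Rmult_le_pos; lra). nra.
Qed.

Lemma expand_pt (c : form) (x y : R) : vanish_pt c ->
  ev c ((x, y), 1) = (c.[2,0] * x ^ 2 + c.[1,1] * x * y + c.[0,2] * y ^ 2)
   + (x * x) * (c.[3,0] * x + c.[2,1] * y + c.[4,0] * (x * x) + c.[3,1] * (x * y) + c.[2,2] * (y * y))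
   + (y * y) * (c.[1,2] * x + c.[0,3] * y + 0 * (x * x) + c.[1,3] * (x * y) + c.[0,4] * (y * y)).
Proof. intros [H0 [H1 H2]]. unfold_ev. rewrite H0, H1, H2. ring. Qed.

Lemma lower_bound_pt (c : form) : vanish_pt c -> exists K, 0 <= K /\
  forall r x y, r <= 1 -> Rabs x <= r -> Rabs y <= r ->
    (c.[2,0] * x ^ 2 + c.[1,1] * x * y + c.[0,2] * y ^ 2) - K * r * (x ^ 2 + y ^ 2)
    <= ev c ((x, y), 1).
Proof.
  intros Hc.
  set (K1 := K5 c.[3,0] c.[2,1] c.[4,0] c.[3,1] c.[2,2]).
  set (K2 := K5 c.[1,2] c.[0,3] 0 c.[1,3] c.[0,4]).
  exists (K1 + K2). split; [pose proof (K5_nonneg c.[3,0] c.[2,1] c.[4,0] c.[3,1] c.[2,2]);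
    pose proof (K5_nonneg c.[1,2] c.[0,3] 0 c.[1,3] c.[0,4]); unfold K1, K2; lra|].
  intros r x y Hr Hx Hy. rewrite expand_pt by exact Hc.
  pose proof (small_tail c.[3,0] c.[2,1] c.[4,0] c.[3,1] c.[2,2] x y r Hx Hy Hr) as T1.
  pose proof (small_tail c.[1,2] c.[0,3] 0 c.[1,3] c.[0,4] x y r Hx Hy Hr) as T2.
  fold K1 in T1. fold K2 in T2.
  assert (Hr0 : 0 <= r) by (pose proof (Rabs_pos x); lra).
  pose proof (K5_nonneg c.[3,0] c.[2,1] c.[4,0] c.[3,1] c.[2,2]) as HK1.
  pose proof (K5_nonneg c.[1,2] c.[0,3] 0 c.[1,3] c.[0,4]) as HK2. fold K1 in HK1. fold K2 in HK2.
  assert (0 <= K1 * r * (y * y)) by (apply Rmult_le_pos; [apply Rmult_le_pos|apply Rle_0_sqr]; lra).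
  assert (0 <= K2 * r * (x * x)) by (apply Rmult_le_pos; [apply Rmult_le_pos|apply Rle_0_sqr]; lra).
  apply (Rmult_le_compat_l (x * x)) in T1; [|apply Rle_0_sqr].
  apply (Rmult_le_compat_l (y * y)) in T2; [|apply Rle_0_sqr].
  lra.
Qed.

Lemma box_nonneg_pt (c d : form) : vanish_pt c -> vanish_pt d ->
  pos_def c.[2,0] c.[1,1] c.[0,2] ->
  exists r, 0 < r /\ exists eps, 0 < eps /\ forall x y, Rabs x <= r -> Rabs y <= r ->
    0 <= ev c ((x, y), 1) + eps * ev d ((x, y), 1).
Proof.
  intros Hc Hd Hpd.
  destruct (pos_def_coercive _ _ _ Hpd) as [kap [Hk HQ]].
  destruct (lower_bound_pt c Hc) as [K [HK HF]].
  destruct (lower_bound_pt d Hd) as [Kd [HKd HG]].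
  set (Kq := Rabs d.[2,0] + Rabs d.[1,1] + Rabs d.[0,2]).
  assert (HKq : 0 <= Kq)
    by (unfold Kq; pose proof (Rabs_pos d.[2,0]); pose proof (Rabs_pos d.[1,1]);
        pose proof (Rabs_pos d.[0,2]); lra).
  apply (box_perturbation (fun x y => x ^ 2 + y ^ 2) (fun x y => c.[2,0] * x ^ 2 + c.[1,1] * x * y + c.[0,2] * y ^ 2)
           _ _ kap K (Kq + Kd) Hk HK ltac:(lra)).
  - intros x y. pose proof (pow2_ge_0 x); pose proof (pow2_ge_0 y). lra.
  - exact HQ.
  - exact HF.
  - intros x y Hx Hy. specialize (HG 1 x y (Rle_refl 1) Hx Hy).
    pose proof (quad_lower_bound d.[2,0] d.[1,1] d.[0,2] x y). fold Kq in H. lra.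
Qed.

Lemma expand_fl (c : form) (x y : R) : vanish_fl c ->
  ev c ((x, y), 1) = (c.[0,2] * y ^ 2 + c.[2,1] * y * (x * x) + c.[4,0] * (x * x) ^ 2)
   + (y * y) * (c.[1,2] * x + c.[0,3] * y + c.[2,2] * (x * x) + c.[1,3] * (x * y) + c.[0,4] * (y * y))
   + c.[3,1] * (x * (x * x * y)).
Proof. intros [[H0 [H1 H2]] [H3 [H4 H5]]]. unfold_ev. rewrite H0, H1, H2, H3, H4, H5. ring. Qed.

Lemma lower_bound_fl (c : form) : vanish_fl c -> exists K, 0 <= K /\
  forall r x y, r <= 1 -> Rabs x <= r -> Rabs y <= r ->
    (c.[0,2] * y ^ 2 + c.[2,1] * y * (x * x) + c.[4,0] * (x * x) ^ 2)
    - K * r * (y ^ 2 + (x * x) ^ 2) <= ev c ((x, y), 1).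
Proof.
  intros Hc.
  set (K1 := K5 c.[1,2] c.[0,3] c.[2,2] c.[1,3] c.[0,4]).
  exists (K1 + Rabs c.[3,1]).
  split; [pose proof (K5_nonneg c.[1,2] c.[0,3] c.[2,2] c.[1,3] c.[0,4]);
          pose proof (Rabs_pos c.[3,1]); unfold K1; lra|].
  intros r x y Hr Hx Hy. rewrite expand_fl by exact Hc.
  pose proof (small_tail c.[1,2] c.[0,3] c.[2,2] c.[1,3] c.[0,4] x y r Hx Hy Hr) as T. fold K1 in T.
  assert (Hxxy : Rabs (x * (x * x * y)) <= r * (y ^ 2 + (x * x) ^ 2)).
  { rewrite (Rabs_mult x), (Rabs_mult (x * x)), (Rabs_right (x * x)) by (apply Rle_ge, Rle_0_sqr).
    pose proof (Rabs_pos x); pose proof (Rabs_pos y); pose proof (pow2_abs y).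
    pose proof (pow2_ge_0 (x * x - Rabs y)); pose proof (Rle_0_sqr x). unfold Rsqr in *.
    assert (x * x * Rabs y <= y ^ 2 + (x * x) ^ 2) by nra.
    apply Rmult_le_compat; try lra. apply Rmult_le_pos; lra. }
  pose proof (abs_term c.[3,1] _ _ Hxxy).
  pose proof (Rle_0_sqr y); pose proof (Rle_0_sqr (x * x)). unfold Rsqr in *.
  assert (0 <= r * (x * x * (x * x))) by (pose proof (Rabs_pos x); apply Rmult_le_pos; lra).
  assert (0 <= K1 * (r * (x * x * (x * x)))) by (apply Rmult_le_pos; [apply K5_nonneg|lra]).
  nra.
Qed.

Lemma box_nonneg_fl (c d : form) : vanish_fl c -> vanish_fl d ->
  pos_def c.[0,2] c.[2,1] c.[4,0] ->
  exists r, 0 < r /\ exists eps, 0 < eps /\ forall x y, Rabs x <= r -> Rabs y <= r ->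
    0 <= ev c ((x, y), 1) + eps * ev d ((x, y), 1).
Proof.
  intros Hc Hd Hpd.
  destruct (pos_def_coercive _ _ _ Hpd) as [kap [Hk HQ]].
  destruct (lower_bound_fl c Hc) as [K [HK HF]].
  destruct (lower_bound_fl d Hd) as [Kd [HKd HG]].
  set (Kq := Rabs d.[0,2] + Rabs d.[2,1] + Rabs d.[4,0]).
  assert (HKq : 0 <= Kq)
    by (unfold Kq; pose proof (Rabs_pos d.[0,2]); pose proof (Rabs_pos d.[2,1]);
        pose proof (Rabs_pos d.[4,0]); lra).
  apply (box_perturbation (fun x y => y ^ 2 + (x * x) ^ 2)
           (fun x y => c.[0,2] * y ^ 2 + c.[2,1] * y * (x * x) + c.[4,0] * (x * x) ^ 2)
           _ _ kap K (Kq + Kd) Hk HK ltac:(lra)).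
  - intros x y. pose proof (pow2_ge_0 y); pose proof (pow2_ge_0 (x * x)). lra.
  - intros x y. exact (HQ y (x * x)).
  - exact HF.
  - intros x y Hx Hy. specialize (HG 1 x y (Rle_refl 1) Hx Hy).
    pose proof (quad_lower_bound d.[0,2] d.[2,1] d.[4,0] y (x * x)). fold Kq in H. lra.
Qed.

Definition near3 (d : R) (v t : V3) : Prop :=
  Rabs (vx v - vx t) < d /\ Rabs (vy v - vy t) < d /\ Rabs (vz v - vz t) < d.

Definition cont3 (F : V3 -> R) (t : V3) : Prop :=
  forall e, 0 < e -> exists d, 0 < d /\ forall v, near3 d v t -> Rabs (F v - F t) < e.

Lemma near3_mono (d d' : R) (v t : V3) : d <= d' -> near3 d v t -> near3 d' v t.
Proof. unfold near3. intros H [H1 [H2 H3]]. repeat split; lra. Qed.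

Lemma cont3_const (a : R) (t : V3) : cont3 (fun _ => a) t.
Proof. intros e He. exists 1. split; [lra|]. intros v _. rewrite Rminus_diag, Rabs_R0. exact He. Qed.

Lemma cont3_x (t : V3) : cont3 vx t.
Proof. intros e He. exists e. split; [exact He|]. intros v [H _]. exact H. Qed.

Lemma cont3_y (t : V3) : cont3 vy t.
Proof. intros e He. exists e. split; [exact He|]. intros v [_ [H _]]. exact H. Qed.

Lemma cont3_z (t : V3) : cont3 vz t.
Proof. intros e He. exists e. split; [exact He|]. intros v [_ [_ H]]. exact H. Qed.

Lemma cont3_opp (F : V3 -> R) (t : V3) : cont3 F t -> cont3 (fun v => - F v) t.
Proof.
  intros HF e He. destruct (HF e He) as [d [Hd H]]. exists d. split; [exact Hd|].
  intros v Hv. replace (- F v - - F t) with (- (F v - F t)) by ring. rewrite Rabs_Ropp. auto.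
Qed.

Lemma cont3_plus (F G : V3 -> R) (t : V3) : cont3 F t -> cont3 G t -> cont3 (fun v => F v + G v) t.
Proof.
  intros HF HG e He.
  destruct (HF (e / 2) ltac:(lra)) as [d1 [Hd1 H1]]. destruct (HG (e / 2) ltac:(lra)) as [d2 [Hd2 H2]].
  exists (Rmin d1 d2). split; [apply Rmin_glb_lt; lra|]. intros v Hv.
  specialize (H1 v (near3_mono _ _ _ _ (Rmin_l d1 d2) Hv)).
  specialize (H2 v (near3_mono _ _ _ _ (Rmin_r d1 d2) Hv)).
  replace (F v + G v - (F t + G t)) with ((F v - F t) + (G v - G t)) by ring.
  pose proof (Rabs_triang (F v - F t) (G v - G t)). lra.
Qed.

Lemma cont3_mult (F G : V3 -> R) (t : V3) : cont3 F t -> cont3 G t -> cont3 (fun v => F v * G v) t.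
Proof.
  intros HF HG e He.
  set (a := Rabs (F t)). set (b := Rabs (G t)).
  assert (Ha : 0 <= a) by apply Rabs_pos. assert (Hb : 0 <= b) by apply Rabs_pos.
  set (e1 := e / (2 * (b + 1))). set (e2 := Rmin 1 (e / (2 * (a + 1)))).
  assert (He1 : 0 < e1) by (unfold e1; apply Rdiv_lt_0_compat; lra).
  assert (He2 : 0 < e2) by (unfold e2; apply Rmin_glb_lt; [lra|apply Rdiv_lt_0_compat; lra]).
  destruct (HF e1 He1) as [d1 [Hd1 H1]]. destruct (HG e2 He2) as [d2 [Hd2 H2]].
  exists (Rmin d1 d2). split; [apply Rmin_glb_lt; lra|]. intros v Hv.
  specialize (H1 v (near3_mono _ _ _ _ (Rmin_l d1 d2) Hv)).
  specialize (H2 v (near3_mono _ _ _ _ (Rmin_r d1 d2) Hv)).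
  replace (F v * G v - F t * G t) with ((F v - F t) * G v + F t * (G v - G t)) by ring.
  pose proof (Rabs_triang ((F v - F t) * G v) (F t * (G v - G t))) as Htri.
  rewrite !Rabs_mult in Htri.
  assert (HGv : Rabs (G v) <= b + 1).
  { pose proof (Rabs_triang (G v - G t) (G t)). replace (G v - G t + G t) with (G v) in H by ring.
    assert (e2 <= 1) by apply Rmin_l. fold b in H. lra. }
  assert (T1 : Rabs (F v - F t) * Rabs (G v) <= e1 * (b + 1))
    by (apply Rmult_le_compat; try apply Rabs_pos; lra).
  assert (T2 : a * Rabs (G v - G t) <= a * e2) by (apply Rmult_le_compat_l; lra).
  assert (T3 : e1 * (b + 1) = e / 2) by (unfold e1; field; lra).
  assert (T4 : a * e2 < e / 2).
  { apply Rle_lt_trans with (a * (e / (2 * (a + 1)))).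
    - apply Rmult_le_compat_l; [exact Ha|apply Rmin_r].
    - apply (Rmult_lt_reg_r (2 * (a + 1))); [lra|].
      replace (a * (e / (2 * (a + 1))) * (2 * (a + 1))) with (a * e) by (field; lra). nra. }
  fold a in Htri. lra.
Qed.

Ltac cont3_tac :=
  unfold Rminus;
  repeat first [ apply cont3_opp | apply cont3_plus | apply cont3_mult | apply cont3_x
               | apply cont3_y | apply cont3_z | apply cont3_const ].

Lemma ev_cont (f : form) (t : V3) : cont3 (ev f) t.
Proof. unfold ev. simpl. cont3_tac. Qed.

Lemma coordsOf_cont (A : coords) (t : V3) :
  cont3 (fun v => vx (coordsOf A v)) t /\ cont3 (fun v => vy (coordsOf A v)) t /\
  cont3 (fun v => vz (coordsOf A v)) t.
Proof. unfold coordsOf, det3v, det3, Rdiv; simpl. split; [|split]; cont3_tac. Qed.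

Lemma near_center_in_box (A : coords) (z t : V3) (r : R) :
  centered A z -> proj_eq z t -> 0 < r ->
  exists d, 0 < d /\ forall v, near3 d v t -> exists X Y Z,
    Rabs X <= r /\ Rabs Y <= r /\ Z <> 0 /\ v = vscal Z (apply A X Y 1).
Proof.
  intros HA Hzt Hr.
  destruct (coordsOf_center A z t HA Hzt) as [X0 [Y0 Z0]].
  destruct (coordsOf_cont A t) as [CX [CY CZ]].
  set (z0 := vz (coordsOf A t)) in *.
  assert (Hz0 : 0 < Rabs z0) by (apply Rabs_pos_lt; exact Z0).
  assert (Hrz : 0 < r * Rabs z0 / 2) by (apply Rdiv_lt_0_compat; [apply Rmult_lt_0_compat|]; lra).
  destruct (CX _ Hrz) as [d1 [Hd1 H1]]. destruct (CY _ Hrz) as [d2 [Hd2 H2]].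
  destruct (CZ (Rabs z0 / 2) ltac:(lra)) as [d3 [Hd3 H3]].
  exists (Rmin d1 (Rmin d2 d3)). split; [repeat apply Rmin_glb_lt; lra|].
  intros v Hv.
  specialize (H1 v (near3_mono _ _ _ _ (Rmin_l _ _) Hv)).
  specialize (H2 v (near3_mono _ _ _ _ (Rle_trans _ _ _ (Rmin_r _ _) (Rmin_l _ _)) Hv)).
  specialize (H3 v (near3_mono _ _ _ _ (Rle_trans _ _ _ (Rmin_r _ _) (Rmin_r _ _)) Hv)).
  rewrite X0, Rminus_0_r in H1. rewrite Y0, Rminus_0_r in H2. fold z0 in H3.
  set (X := vx (coordsOf A v)) in *. set (Y := vy (coordsOf A v)) in *.
  set (Z := vz (coordsOf A v)) in *.
  assert (HZ : Rabs z0 / 2 < Rabs Z).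
  { pose proof (Rabs_triang (z0 - Z) Z). replace (z0 - Z + Z) with z0 in H by ring.
    rewrite <- Rabs_Ropp in H3. replace (- (Z - z0)) with (z0 - Z) in H3 by ring. lra. }
  assert (HZ0 : Z <> 0) by (intros E; rewrite E, Rabs_R0 in HZ; lra).
  assert (Hq : forall w, Rabs w < r * Rabs z0 / 2 -> Rabs (w / Z) <= r).
  { intros w Hw. unfold Rdiv. rewrite Rabs_mult, Rabs_inv.
    apply (Rmult_le_reg_r (Rabs Z)); [lra|]. rewrite Rmult_assoc, Rinv_l by lra.
    assert (r * Rabs z0 / 2 <= r * Rabs Z) by (apply (Rmult_le_reg_r 2); [lra|]; nra). lra. }
  exists (X / Z), (Y / Z), Z. split; [exact (Hq X H1)|split; [exact (Hq Y H2)|split; [exact HZ0|]]].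
  rewrite <- (applyv_coordsOf A v (proj1 HA)) at 1. unfold applyv. fold X Y Z.
  destruct A as [[[u1 u2] u3] [[v1 v2] v3] [[w1 w2] w3]].
  unfold apply, vscal, vx, vy, vz; simpl. f_equal; [f_equal|]; field; exact HZ0.
Qed.

Lemma nonneg_near_center (A : coords) (z t : V3) (f g : form) (r e : R) :
  centered A z -> proj_eq z t -> 0 < r ->
  (forall x y, Rabs x <= r -> Rabs y <= r ->
     0 <= ev (pullback A f) ((x, y), 1) + e * ev (pullback A g) ((x, y), 1)) ->
  exists d, 0 < d /\ forall v, near3 d v t -> 0 <= ev f v + e * ev g v.
Proof.
  intros HA Hzt Hr H.
  destruct (near_center_in_box A z t r HA Hzt Hr) as [d [Hd Hbox]].
  exists d. split; [exact Hd|]. intros v Hv.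
  destruct (Hbox v Hv) as [X [Y [Z [HX [HY [HZ ->]]]]]].
  rewrite !ev_scal, !ev_pullback.
  replace (Z ^ 4 * ev (pullback A f) (X, Y, 1) + e * (Z ^ 4 * ev (pullback A g) (X, Y, 1)))
    with (Z ^ 4 * (ev (pullback A f) (X, Y, 1) + e * ev (pullback A g) (X, Y, 1))) by ring.
  apply Rmult_le_pos; [|exact (H X Y HX HY)].
  replace (Z ^ 4) with ((Z ^ 2) ^ 2) by ring. apply pow2_ge_0.
Qed.

(** * From local to global nonnegativity by compactness *)

Lemma nonneg_near_positive (f g : form) (t : V3) : 0 < ev f t ->
  exists d, 0 < d /\ exists e, 0 < e /\ forall v, near3 d v t -> 0 <= ev f v + e * ev g v.
Proof.
  intros Hpos.
  destruct (ev_cont f t (ev f t / 2) ltac:(lra)) as [d1 [Hd1 H1]].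
  destruct (ev_cont g t 1 ltac:(lra)) as [d2 [Hd2 H2]].
  set (B := Rabs (ev g t) + 1).
  assert (HB : 0 < B) by (unfold B; pose proof (Rabs_pos (ev g t)); lra).
  exists (Rmin d1 d2). split; [apply Rmin_glb_lt; lra|].
  exists (ev f t / 2 / B). split; [apply Rdiv_lt_0_compat; lra|].
  intros v Hv.
  specialize (H1 v (near3_mono _ _ _ _ (Rmin_l d1 d2) Hv)).
  specialize (H2 v (near3_mono _ _ _ _ (Rmin_r d1 d2) Hv)).
  apply Rabs_def2 in H1. apply Rabs_def2 in H2.
  assert (Hg : - B <= ev g v)
    by (unfold B; pose proof (Rle_abs (- ev g t)); rewrite Rabs_Ropp in *; lra).
  assert (E : ev f t / 2 / B * B = ev f t / 2) by (field; lra).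
  assert (ev f t / 2 / B * ev g v >= ev f t / 2 / B * (- B))
    by (apply Rle_ge, Rmult_le_compat_l; [apply Rlt_le, Rdiv_lt_0_compat|]; lra).
  lra.
Qed.

Lemma abs_le_bounds (x r : R) : Rabs x <= r -> - r <= x <= r.
Proof. intros H. pose proof (Rle_abs x). pose proof (Rle_abs (- x)). rewrite Rabs_Ropp in H1. lra. Qed.

(** The boundary of the cube [[-1,1]^3], onto which every nonzero vector
    can be rescaled. *)
Definition on_cube (v : V3) : Prop :=
  Rabs (vx v) <= 1 /\ Rabs (vy v) <= 1 /\ Rabs (vz v) <= 1 /\
  ~ (Rabs (vx v) < 1 /\ Rabs (vy v) < 1 /\ Rabs (vz v) < 1).

Lemma cube_rescale (v : V3) : v <> v0 -> exists m u, 0 < m /\ on_cube u /\ v = vscal m u.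
Proof.
  destruct v as [[a b] c]. intros Hv.
  set (m := Rmax (Rabs a) (Rmax (Rabs b) (Rabs c))).
  assert (Ha : Rabs a <= m) by apply Rmax_l.
  assert (Hb : Rabs b <= m) by (eapply Rle_trans; [apply Rmax_l|apply Rmax_r]).
  assert (Hc : Rabs c <= m) by (eapply Rle_trans; [apply Rmax_r|apply Rmax_r]).
  assert (Hm : m = Rabs a \/ m = Rabs b \/ m = Rabs c).
  { unfold m. destruct (Rle_dec (Rabs b) (Rabs c)) as [Hbc|Hbc];
      [rewrite (Rmax_right _ _ Hbc)|rewrite (Rmax_left (Rabs b) (Rabs c)) by lra];
      match goal with |- Rmax ?x ?y = _ \/ _ => destruct (Rle_dec x y) end;
      [rewrite Rmax_right by lra|rewrite Rmax_left by lra|rewrite Rmax_right by lra|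
       rewrite Rmax_left by lra]; auto. }
  clearbody m.
  assert (Hmp : 0 < m).
  { destruct (Rle_lt_or_eq_dec 0 m ltac:(pose proof (Rabs_pos a); lra)) as [|Hm0]; [assumption|].
    exfalso. apply Hv. rewrite <- Hm0 in Ha, Hb, Hc.
    apply abs_le_bounds in Ha, Hb, Hc. unfold v0. f_equal; [f_equal|]; lra. }
  exists m, (vscal (/ m) ((a, b), c)). split; [exact Hmp|split].
  - assert (Hs : forall w, Rabs (/ m * w) = Rabs w / m).
    { intros w. rewrite Rabs_mult, Rabs_inv, (Rabs_right m) by lra. unfold Rdiv. ring. }
    unfold on_cube, vscal, vx, vy, vz; simpl. rewrite !Hs.
    assert (Hle : forall w, Rabs w <= m -> Rabs w / m <= 1)
      by (intros w Hw; apply (Rmult_le_reg_r m); [lra|]; field_simplify; lra).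
    split; [auto|split; [auto|split; [auto|]]].
    intros [K1 [K2 K3]].
    destruct Hm as [E|[E|E]]; rewrite <- E in *; field_simplify in K1; field_simplify in K2;
      field_simplify in K3; lra.
  - unfold vscal, vx, vy, vz; simpl. f_equal; [f_equal|]; field; lra.
Qed.

Section LocalToGlobal.
Variables f g : form.
Hypothesis Hpsd : psd f.
Hypothesis Hzeros : forall t, t <> v0 -> ev f t = 0 ->
  exists d, 0 < d /\ exists e, 0 < e /\ forall v, near3 d v t -> 0 <= ev f v + e * ev g v.

Lemma nonneg_near_any (t : V3) : exists de : R * R, 0 < fst de /\ 0 < snd de /\
  forall v, near3 (fst de) v t -> on_cube v -> 0 <= ev f v + snd de * ev g v.
Proof.
  destruct (classic (Rabs (vx t) < 1/2 /\ Rabs (vy t) < 1/2 /\ Rabs (vz t) < 1/2)) as [Hs|Hs].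
  - exists (1/2, 1). simpl. split; [lra|split; [lra|]].
    intros v [H1 [H2 H3]] [_ [_ [_ Hv]]]. exfalso. apply Hv. destruct Hs as [K1 [K2 K3]].
    pose proof (Rabs_triang (vx v - vx t) (vx t)). pose proof (Rabs_triang (vy v - vy t) (vy t)).
    pose proof (Rabs_triang (vz v - vz t) (vz t)).
    replace (vx v - vx t + vx t) with (vx v) in H by ring.
    replace (vy v - vy t + vy t) with (vy v) in H0 by ring.
    replace (vz v - vz t + vz t) with (vz v) in H4 by ring. lra.
  - assert (Ht : t <> v0).
    { intros E. apply Hs. subst t. unfold v0, vx, vy, vz; simpl. rewrite Rabs_R0. lra. }
    assert (Hloc : exists d, 0 < d /\ exists e, 0 < e /\
              forall v, near3 d v t -> 0 <= ev f v + e * ev g v).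
    { destruct (Req_dec (ev f t) 0) as [Hz|Hz]; [exact (Hzeros t Ht Hz)|].
      apply nonneg_near_positive. pose proof (Hpsd t). lra. }
    destruct Hloc as [d [Hd [e [He H]]]]. exists (d, e). simpl. auto.
Qed.

Definition tn (v : V3) : Tn 3 R := (vx v, (vy v, (vz v, tt))).
Definition nt (t : Tn 3 R) : V3 := match t with (a, (b, (c, _))) => ((a, b), c) end.

(** Compactness of the cube: finitely many neighbourhoods cover it, and the
    least of their [e] works on the whole cube. *)
Lemma uniform_on_cube : exists eps, 0 < eps /\ forall u, on_cube u -> 0 <= ev f u + eps * ev g u.
Proof.
  set (F := fun t : Tn 3 R => proj1_sig (constructive_indefinite_description _ (nonneg_near_any (nt t)))).
  assert (HF : forall t, 0 < fst (F t) /\ 0 < snd (F t) /\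
     forall v, near3 (fst (F t)) v (nt t) -> on_cube v -> 0 <= ev f v + snd (F t) * ev g v).
  { intros t. unfold F. destruct (constructive_indefinite_description _ _) as [de Hde]. exact Hde. }
  set (delta := fun t => mkposreal (fst (F t)) (proj1 (HF t))).
  destruct (NNPP _ (compactness_list 3 (-1, (-1, (-1, tt))) (1, (1, (1, tt))) delta)) as [l Hl].
  set (eps := fold_right Rmin 1 (map (fun t => snd (F t)) l)).
  assert (Heps : 0 < eps).
  { unfold eps. clear Hl. induction l as [|t l IH]; simpl; [lra|].
    apply Rmin_glb_lt; [apply HF|exact IH]. }
  assert (Hle : forall t, In t l -> eps <= snd (F t)).
  { unfold eps. clear Hl Heps eps. induction l as [|t' l IH]; simpl; [tauto|].
    intros t [E|E]; [subst; apply Rmin_l|]. eapply Rle_trans; [apply Rmin_r|]. apply IH, E. }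
  exists eps. split; [exact Heps|]. intros u Hu.
  destruct Hu as [Hx [Hy [Hz Hs]]].
  destruct (Hl (tn u)) as [t [Ht [_ Hcl]]].
  { unfold tn; simpl. apply abs_le_bounds in Hx, Hy, Hz. repeat split; lra. }
  destruct (HF t) as [_ [He Hnear]].
  assert (H1 : 0 <= ev f u + snd (F t) * ev g u).
  { apply Hnear; [|repeat split; assumption].
    destruct t as [t1 [t2 [t3 []]]]. unfold tn, nt, near3 in *; simpl in *. tauto. }
  pose proof (Hle t Ht). pose proof (Hpsd u).
  destruct (Rle_or_lt 0 (ev g u)).
  - assert (0 <= eps * ev g u) by (apply Rmult_le_pos; lra). lra.
  - assert (eps * ev g u >= snd (F t) * ev g u) by nra. lra.
Qed.

(** By homogeneity, [f + eps g] is then nonnegative everywhere. *)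
Lemma global_perturbation : exists eps, 0 < eps /\ psd (fun i j => eps * g i j + f i j).
Proof.
  destruct uniform_on_cube as [eps [Heps H]]. exists eps. split; [exact Heps|].
  intros v. rewrite ev_comb.
  destruct (classic (v = v0)) as [->|Hv].
  - unfold_ev. lra.
  - destruct (cube_rescale v Hv) as [m [u [Hm [Hu ->]]]]. rewrite !ev_scal.
    specialize (H u Hu). pose proof (pow_lt m 4 Hm). nra.
Qed.

End LocalToGlobal.

Lemma span_coeff_zero (F : form -> Prop) (A : coords) (g : form) (i j : nat) :
  in_span F g -> (i + j <= 4)%nat -> (forall h, F h -> pullback A h i j = 0) ->
  pullback A g i j = 0.
Proof.
  intros [l [Hl Hg]] Hij H.
  rewrite (pullback_feq A g (lincomb l) Hg i j Hij).
  apply pullback_lincomb_zero; [exact Hij|]. intros rh Hrh. apply H, Hl, Hrh.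
Qed.

Lemma span_F_S_in_I_S (n m : nat) (s p L : nat -> V3) (g : form) :
  (forall j, (j < m)%nat -> L j <> v0) ->
  (forall i, (i < n)%nat -> exists A, centered A (s i)) ->
  (forall j, (j < m)%nat -> exists A, centered_line A (p j) (L j)) ->
  in_span (F_S n m s p L) g -> I_S n m s p L g.
Proof.
  intros HL Hs Hp Hg. split.
  - intros i Hi. destruct (Hs i Hi) as [A HA].
    assert (H : forall h, F_S n m s p L h -> vanish_pt (pullback A h))
      by (intros h [Hh _]; destruct (Hh i Hi) as [Hpsd Hz]; exact (F_pt_vanish A (s i) h Hpsd HA Hz)).
    exists A, (pullback A g). split; [exact HA|split; [apply loc_coeffs_pullback|]].
    repeat split; apply (span_coeff_zero _ A g _ _ Hg); try (simpl; lia);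
      intros h Hh; apply H in Hh as [? [? ?]]; assumption.
  - intros j Hj. destruct (Hp j Hj) as [A HA].
    assert (H : forall h, F_S n m s p L h -> vanish_fl (pullback A h))
      by (intros h [_ Hh]; exact (F_fl_vanish A (p j) (L j) h (HL j Hj) (Hh j Hj) HA)).
    exists A, (pullback A g). split; [exact HA|split; [apply loc_coeffs_pullback|]].
    repeat split; apply (span_coeff_zero _ A g _ _ Hg); try (simpl; lia);
      intros h Hh; apply H in Hh as [[? [? ?]] [? [? ?]]]; assumption.
Qed.

Lemma local_nonneg_pt (s t : V3) (f g : form) :
  psd f -> inp_empty s f -> I_pt s g -> proj_eq s t ->
  exists d, 0 < d /\ exists e, 0 < e /\ forall v, near3 d v t -> 0 <= ev f v + e * ev g v.
Proof.
  intros Hf [A [a [HA [Hla [Hoa Hnz]]]]] Hg Hst.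
  pose proof (pos_def_at_pt A f a Hf Hla Hoa Hnz) as Hpd.
  destruct (box_nonneg_pt _ _ (vanish_pt_of_ord_ge2 A f a Hla Hoa) (I_pt_vanish A s g Hg HA) Hpd)
    as [r [Hr [e [He H]]]].
  destruct (nonneg_near_center A s t f g r e HA Hst Hr H) as [d [Hd Hnear]].
  exists d. split; [exact Hd|]. exists e. auto.
Qed.

Lemma local_nonneg_fl (p L t : V3) (f g : form) : L <> v0 ->
  psd f -> F_fl p L f -> disc_cond p L f -> I_fl p L g -> proj_eq p t ->
  exists d, 0 < d /\ exists e, 0 < e /\ forall v, near3 d v t -> 0 <= ev f v + e * ev g v.
Proof.
  intros HL Hf HFf [A [a [HA [Hla HD]]]] Hg Hpt.
  pose proof (F_fl_vanish A p L f HL HFf HA) as Hvf.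
  destruct (box_nonneg_fl _ _ Hvf (I_fl_vanish A p L g HL Hg HA) (pos_def_at_fl A f a Hf Hla HD Hvf))
    as [r [Hr [e [He H]]]].
  destruct (nonneg_near_center A p t f g r e (proj1 HA) Hpt Hr H) as [d [Hd Hnear]].
  exists d. split; [exact Hd|]. exists e. auto.
Qed.

Lemma span_of_perturbation (F : form -> Prop) (f g : form) (eps : R) : eps <> 0 ->
  F f -> F (fun i j => eps * g i j + f i j) -> in_span F g.
Proof.
  intros Heps Hf Hh. exists ((1 / eps, fun i j => eps * g i j + f i j) :: (- 1 / eps, f) :: nil).
  split.
  - intros rh [<-|[<-|[]]]; assumption.
  - intros i j _. unfold lincomb; simpl. field. exact Heps.
Qed.

Lemma perturbation_in_F_S (n m : nat) (s p L : nat -> V3) (f g : form) (eps : R) :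
  (forall j, (j < m)%nat -> L j <> v0) ->
  F_S n m s p L f -> I_S n m s p L g -> psd (fun i j => eps * g i j + f i j) ->
  F_S n m s p L (fun i j => eps * g i j + f i j).
Proof.
  intros HL [HFs HFl] [HIs HIl] Hh. split.
  - intros i Hi. split; [exact Hh|]. destruct (HFs i Hi) as [_ Hf0].
    destruct (HIs i Hi) as [A [a [HA [Hla Hoa]]]].
    assert (Hg0 : ev g (s i) = 0).
    { apply (zero_at_center A (s i) g HA). exact (proj1 (vanish_pt_of_ord_ge2 A g a Hla Hoa)). }
    rewrite ev_comb, Hg0, Hf0. ring.
  - intros j Hj. destruct (HFl j Hj) as [Hf [Hf0 [A [a [HA [Hla H20]]]]]].
    destruct (I_fl_vanish A (p j) (L j) g (HL j Hj) (HIl j Hj) HA) as [[Hg0 _] [Hg20 _]].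
    split; [exact Hh|split].
    + rewrite ev_comb, (proj2 (zero_at_center A (p j) g (proj1 HA)) Hg0), Hf0. ring.
    + exists A, (pullback A (fun i j => eps * g i j + f i j)).
      split; [exact HA|split; [apply loc_coeffs_pullback|]].
      rewrite (pullback_comb A eps g f 2%nat 0%nat ltac:(lia)), Hg20.
      rewrite <- (loc_coeffs_unique A f a Hla) by (simpl; lia). rewrite H20. ring.
Qed.

Theorem mainTheorem4 (n m : nat) (s p L : nat -> V3) :
  config n m s p L ->
  (exists f : form,
     F_S n m s p L f /\
     zeroset_eq n m s p f /\
     (forall i, (i < n)%nat -> inp_empty (s i) f) /\
     (forall j, (j < m)%nat -> ord_eq2 (p j) f) /\
     (forall j, (j < m)%nat -> disc_cond (p j) (L j) f)) ->
  forall g : form, in_span (F_S n m s p L) g <-> I_S n m s p L g.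
Proof.
  intros [_ [HpL _]] [f [HF [HZ [Hinp [_ Hdisc]]]]] g.
  assert (HL : forall j, (j < m)%nat -> L j <> v0) by (intros j Hj; apply (HpL j Hj)).
  split.
  - apply span_F_S_in_I_S; [exact HL| |].
    + intros i Hi. destruct (Hinp i Hi) as [A [_ [HA _]]]. exists A. exact HA.
    + intros j Hj. destruct (Hdisc j Hj) as [A [_ [HA _]]]. exists A. exact HA.
  - intros HI.
    destruct (classic (n = 0%nat /\ m = 0%nat)) as [[-> ->]|Hnm].
    { exists ((1, g) :: nil). split.
      - intros rh [<-|[]]. split; intros; lia.
      - intros i j _. unfold lincomb; simpl. ring. }
    assert (Hf : psd f).
    { destruct n as [|n']; [destruct m as [|m']; [tauto|]|].
      - exact (proj1 (proj2 HF 0%nat ltac:(lia))).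
      - exact (proj1 (proj1 HF 0%nat ltac:(lia))). }
    assert (Hzeros : forall t, t <> v0 -> ev f t = 0 -> exists d, 0 < d /\
              exists e, 0 < e /\ forall v, near3 d v t -> 0 <= ev f v + e * ev g v).
    { intros t Ht Hft. destruct (proj1 (HZ t Ht) Hft) as [[i [Hi Ei]]|[j [Hj Ej]]].
      - exact (local_nonneg_pt (s i) t f g Hf (Hinp i Hi) (proj1 HI i Hi) Ei).
      - exact (local_nonneg_fl (p j) (L j) t f g (HL j Hj) Hf (proj2 HF j Hj) (Hdisc j Hj)
                 (proj2 HI j Hj) Ej). }
    destruct (global_perturbation f g Hf Hzeros) as [eps [Heps Hh]].
    apply (span_of_perturbation _ f g eps); [lra|exact HF|].
    exact (perturbation_in_F_S n m s p L f g eps HL HF HI Hh).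
Qed.
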